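(* Fix $\beta\in(0,1/3)$. There exist $\epsilon_0>0$ and $q_0>0$ such that for every $q\in(0,q_0]$ there is $C_q>0$ such that for all $\epsilon\in(0,\epsilon_0]$: $$\sup_{K\in\mathbb{R}}\big|(1+K^2)^{1/4}\,l_\epsilon(K+iq)^{-1}\big|\le C_q,\qquad \sup_{K\in\mathbb{R}}\big|l_\epsilon(K+iq)^{-1}+\gamma_\beta^{-1}(1+(K+iq)^2)^{-1}\big|\le C_q\,\epsilon.$$
   Context: $m_\beta(k)=\sqrt{(1+\beta k^2)\tanh(k)/k}$, extended analytically to a neighborhood of the real axis in $\mathbb{C}$; $\gamma_\beta=(1-3\beta)/6$; $l_\epsilon(Z)=\epsilon^{-2}(m_\beta(\epsilon Z)-1-\gamma_\beta\epsilon^2)$ for complex $Z$ with $|\mathrm{Im}\,Z|$ small. *)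

From Stdlib Require Import Reals Lra.
Open Scope R_scope.

Record C := mkC { Re : R ; Im : R }.

Definition Cadd (z w : C) : C := mkC (Re z + Re w) (Im z + Im w).
Definition Csub (z w : C) : C := mkC (Re z - Re w) (Im z - Im w).
Definition Cmul (z w : C) : C :=
  mkC (Re z * Re w - Im z * Im w) (Re z * Im w + Im z * Re w).
Definition RtoC (x : R) : C := mkC x 0.
Definition Cnorm (z : C) : R := sqrt (Re z * Re z + Im z * Im z).
(* multiplicative inverse (total: Cinv 0 = 0, only used at nonzero points) *)
Definition Cinv (z : C) : C :=
  let d := Re z * Re z + Im z * Im z in mkC (Re z / d) (- Im z / d).
Definition Cdiv (z w : C) : C := Cmul z (Cinv w).
Definition Cexp (z : C) : C := mkC (exp (Re z) * cos (Im z)) (exp (Re z) * sin (Im z)).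
Definition Ctanh (z : C) : C :=
  let e := Cexp (Cmul (RtoC 2) z) in Cdiv (Csub e (RtoC 1)) (Cadd e (RtoC 1)).
(* principal square root (branch cut on the negative real axis) *)
Definition Csqrt (z : C) : C :=
  let r := Cnorm z in
  mkC (sqrt ((r + Re z) / 2))
      ((if Rlt_dec (Im z) 0 then -1 else 1) * sqrt ((r - Re z) / 2)).

(* m_beta(k) = sqrt((1 + beta k^2) tanh(k)/k), principal branch; near the real
   axis this is the analytic continuation of the positive real function. *)
Definition m_beta (beta : R) (k : C) : C :=
  Csqrt (Cdiv (Cmul (Cadd (RtoC 1) (Cmul (RtoC beta) (Cmul k k))) (Ctanh k)) k).

Definition gamma_beta (beta : R) : R := (1 - 3 * beta) / 6.

Definition l_eps (beta eps : R) (Z : C) : C :=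
  Cmul (RtoC (/ (eps * eps)))
    (Csub (m_beta beta (Cmul (RtoC eps) Z)) (RtoC (1 + gamma_beta beta * (eps * eps)))).

From Pilot Require Import Defs.
From Stdlib Require Import Reals Lra Psatz.
From Coquelicot Require Import Rcomplements Hierarchy Derive AutoDerive.
Import Defs.
Open Scope R_scope.

(* Write [k = eps Z] and [F = m_beta(k)^2 = (1 + beta k^2) tanh k / k].  Then
   [l_eps(Z) = eps^-2 (sqrt F - c)] with [c = 1 + gamma_beta eps^2], and
   [l_eps(Z) + gamma_beta (1 + Z^2) = eps^-2 (sqrt F - 1 + gamma_beta k^2)], so both
   estimates follow from a lower bound on [|sqrt F - c|] and an upper bound on
   [|sqrt F - 1 + gamma_beta k^2|].  As [Re sqrt F >= 0], the identity
   [(sqrt F - c)(sqrt F + c) = F - c^2] reduces these to bounds on [F].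

   For small [|k|] the Taylor expansion [F = 1 - 2 gamma_beta k^2 + O(k^3)] gives
   [|F - c^2| >= gamma_beta eps^2 (1 + |Z|^2) / 2] and an [O(|k|^3)] error.
   For [|k|] bounded below, write [k = a + i b] with [0 < b = eps q] small; the explicit
   formula for [tanh] shows [|F - c'| >= kappa b (1 + |a|)] for [c'] in [[1, 2]]:
   for large [|a|] because [Re F ~ beta |a|], and for intermediate [|a|] through a
   combination of [Re F - c'] and [Im F] in which [beta] cancels and whose positivity
   comes from an inequality between [sinh] and [cosh].  With [|F| <= M (1 + |a|)] this
   bounds [|sqrt F - c|] below by a multiple of [eps q sqrt (1 + |eps K|)]. *)

(** * Complex arithmetic *)

Lemma C_ext z w : Re z = Re w -> Im z = Im w -> z = w.
Proof. destruct z, w; simpl; intros -> ->; reflexivity. Qed.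

Definition Copp (z : C) : C := mkC (- Re z) (- Im z).

Lemma C_ring : ring_theory (RtoC 0) (RtoC 1) Cadd Cmul Csub Copp (@eq C).
Proof. constructor; intros; apply C_ext; simpl; ring. Qed.
Add Ring C_ring : C_ring.

Definition Cnorm2 (z : C) : R := Re z * Re z + Im z * Im z.

Lemma Cnorm2_ge0 z : 0 <= Cnorm2 z.
Proof. unfold Cnorm2; nra. Qed.

Lemma Cnorm2_eq0 z : Cnorm2 z = 0 -> z = RtoC 0.
Proof. unfold Cnorm2; intros; apply C_ext; simpl; nra. Qed.

Lemma Cnorm_ge0 z : 0 <= Cnorm z.
Proof. apply sqrt_pos. Qed.

Lemma Cnorm_sqr z : Cnorm z * Cnorm z = Cnorm2 z.
Proof. apply sqrt_sqrt, Cnorm2_ge0. Qed.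

Lemma Cnorm_mkC_sqr x y : Cnorm (mkC x y) * Cnorm (mkC x y) = x * x + y * y.
Proof. apply Cnorm_sqr. Qed.

Lemma Cnorm_mul z w : Cnorm (Cmul z w) = Cnorm z * Cnorm w.
Proof.
  unfold Cnorm; rewrite <- sqrt_mult by (apply Cnorm2_ge0).
  f_equal; unfold Cnorm2; simpl; ring.
Qed.

Lemma Cnorm_RtoC x : Cnorm (RtoC x) = Rabs x.
Proof.
  unfold Cnorm; simpl; replace (x * x + 0 * 0) with (x * x) by ring.
  apply sqrt_Rsqr_abs.
Qed.

Lemma Cnorm_scale x z : Cnorm (Cmul (RtoC x) z) = Rabs x * Cnorm z.
Proof. now rewrite Cnorm_mul, Cnorm_RtoC. Qed.

Lemma Rle_of_sqr_le x y : 0 <= y -> x * x <= y * y -> x <= y.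
Proof. nra. Qed.

Lemma Rabs_Re_le z : Rabs (Re z) <= Cnorm z.
Proof.
  apply Rle_of_sqr_le; [apply Cnorm_ge0|].
  rewrite Cnorm_sqr, <- Rabs_mult, Rabs_right by nra; unfold Cnorm2; nra.
Qed.

Lemma Rabs_Im_le z : Rabs (Im z) <= Cnorm z.
Proof.
  apply Rle_of_sqr_le; [apply Cnorm_ge0|].
  rewrite Cnorm_sqr, <- Rabs_mult, Rabs_right by nra; unfold Cnorm2; nra.
Qed.

Lemma Cnorm_le_Rabs_Re_Im z : Cnorm z <= Rabs (Re z) + Rabs (Im z).
Proof.
  pose proof (Rabs_pos (Re z)); pose proof (Rabs_pos (Im z)).
  apply Rle_of_sqr_le; [lra|].
  rewrite Cnorm_sqr; unfold Cnorm2.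
  rewrite <- (Rabs_right (Re z * Re z)), <- (Rabs_right (Im z * Im z)), !Rabs_mult by nra.
  nra.
Qed.

Lemma Cnorm_triangle z w : Cnorm (Cadd z w) <= Cnorm z + Cnorm w.
Proof.
  pose proof (Cnorm_ge0 z); pose proof (Cnorm_ge0 w).
  assert (Hcs : Re z * Re w + Im z * Im w <= Cnorm z * Cnorm w).
  { apply Rle_of_sqr_le; [nra|].
    replace (Cnorm z * Cnorm w * (Cnorm z * Cnorm w))
      with (Cnorm z * Cnorm z * (Cnorm w * Cnorm w)) by ring.
    rewrite !Cnorm_sqr; unfold Cnorm2.
    pose proof (Rle_0_sqr (Re z * Im w - Im z * Re w)); unfold Rsqr in *; nra. }
  apply Rle_of_sqr_le; [lra|].
  rewrite Cnorm_sqr; unfold Cnorm2; simpl.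
  replace ((Cnorm z + Cnorm w) * (Cnorm z + Cnorm w))
    with (Cnorm z * Cnorm z + Cnorm w * Cnorm w + 2 * (Cnorm z * Cnorm w)) by ring.
  rewrite !Cnorm_sqr; unfold Cnorm2; nra.
Qed.

Lemma Cnorm_triangle3 a b c :
  Cnorm (Cadd (Cadd a b) c) <= Cnorm a + Cnorm b + Cnorm c.
Proof. pose proof (Cnorm_triangle (Cadd a b) c); pose proof (Cnorm_triangle a b); lra. Qed.

Lemma Cnorm_triangle4 a b c d :
  Cnorm (Cadd (Cadd (Cadd a b) c) d) <= Cnorm a + Cnorm b + Cnorm c + Cnorm d.
Proof. pose proof (Cnorm_triangle (Cadd (Cadd a b) c) d); pose proof (Cnorm_triangle3 a b c); lra. Qed.

Lemma Cnorm_opp z : Cnorm (Copp z) = Cnorm z.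
Proof. unfold Cnorm, Copp; simpl; f_equal; ring. Qed.

Lemma Cnorm_sub_sym z w : Cnorm (Csub z w) = Cnorm (Csub w z).
Proof. replace (Csub z w) with (Copp (Csub w z)) by ring; apply Cnorm_opp. Qed.

Lemma Cnorm_sub_le z w : Cnorm (Csub z w) <= Cnorm z + Cnorm w.
Proof.
  replace (Csub z w) with (Cadd z (Copp w)) by ring.
  rewrite <- (Cnorm_opp w); apply Cnorm_triangle.
Qed.

Lemma Cnorm_add_ge z w : Cnorm z - Cnorm w <= Cnorm (Cadd z w).
Proof.
  pose proof (Cnorm_sub_le (Cadd z w) w) as H.
  replace (Csub (Cadd z w) w) with z in H by ring; lra.
Qed.

Lemma Cnorm_sub_ge z w : Cnorm z - Cnorm w <= Cnorm (Csub z w).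
Proof.
  replace (Csub z w) with (Cadd z (Copp w)) by ring.
  rewrite <- (Cnorm_opp w); apply Cnorm_add_ge.
Qed.

Lemma Cnorm2_pos z : z <> RtoC 0 -> 0 < Cnorm2 z.
Proof. intros Hz; destruct (Cnorm2_ge0 z); auto; now destruct Hz; apply Cnorm2_eq0. Qed.

Lemma Cnorm_pos z : z <> RtoC 0 -> 0 < Cnorm z.
Proof. intros Hz; apply sqrt_lt_R0, Cnorm2_pos, Hz. Qed.

Lemma Cnorm_neq0 z : 0 < Cnorm z -> z <> RtoC 0.
Proof. intros Hz ->; rewrite Cnorm_RtoC, Rabs_R0 in Hz; lra. Qed.

Lemma Cmul_Cinv_r z : z <> RtoC 0 -> Cmul z (Cinv z) = RtoC 1.
Proof.
  intros Hz; pose proof (Cnorm2_pos z Hz); unfold Cnorm2 in *.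
  apply C_ext; unfold Cinv; simpl; field; lra.
Qed.

Lemma Cnorm_Cinv z : z <> RtoC 0 -> Cnorm (Cinv z) = / Cnorm z.
Proof.
  intros Hz; pose proof (Cnorm_pos z Hz).
  assert (H1 : Cnorm z * Cnorm (Cinv z) = 1)
    by now rewrite <- Cnorm_mul, Cmul_Cinv_r, Cnorm_RtoC, Rabs_R1.
  apply (Rmult_eq_reg_l (Cnorm z)); [rewrite H1; field|]; lra.
Qed.

Lemma Csqrt_radicands_ge0 z : 0 <= (Cnorm z + Re z) / 2 /\ 0 <= (Cnorm z - Re z) / 2.
Proof. pose proof (Rabs_Re_le z); unfold Rabs in *; destruct Rcase_abs; lra. Qed.

Lemma Csqrt_sqr z : Cmul (Csqrt z) (Csqrt z) = z.
Proof.
  destruct (Csqrt_radicands_ge0 z) as [Hp Hm].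
  set (x := sqrt ((Cnorm z + Re z) / 2)); set (y := sqrt ((Cnorm z - Re z) / 2)).
  assert (Hxy : x * y = Rabs (Im z / 2)).
  { unfold x, y; rewrite <- sqrt_mult by lra.
    replace ((Cnorm z + Re z) / 2 * ((Cnorm z - Re z) / 2))
      with ((Cnorm z * Cnorm z - Re z * Re z) / 4) by field.
    rewrite Cnorm_sqr; unfold Cnorm2.
    replace ((Re z * Re z + Im z * Im z - Re z * Re z) / 4) with (Rsqr (Im z / 2))
      by (unfold Rsqr; field).
    apply sqrt_Rsqr_abs. }
  assert (Hx : x * x = (Cnorm z + Re z) / 2) by (apply sqrt_sqrt; lra).
  assert (Hy : y * y = (Cnorm z - Re z) / 2) by (apply sqrt_sqrt; lra).
  unfold Csqrt; cbv zeta; fold x y.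
  apply C_ext; simpl; destruct (Rlt_dec (Im z) 0).
  - nra.
  - nra.
  - rewrite Rabs_left in Hxy by lra; nra.
  - rewrite Rabs_right in Hxy by lra; nra.
Qed.

Lemma Re_Csqrt_ge0 z : 0 <= Re (Csqrt z).
Proof. apply sqrt_pos. Qed.

Lemma Cnorm_Csqrt z : Cnorm (Csqrt z) = sqrt (Cnorm z).
Proof.
  destruct (Csqrt_radicands_ge0 z) as [Hp Hm].
  unfold Csqrt at 1, Cnorm at 1; simpl; f_equal.
  pose proof (sqrt_sqrt _ Hp); pose proof (sqrt_sqrt _ Hm).
  destruct Rlt_dec; nra.
Qed.

(** * Comparison principle and elementary inequalities *)

Lemma is_derive_Rplus (f g : R -> R) t df dg :
  is_derive f t df -> is_derive g t dg -> is_derive (fun x => f x + g x) t (df + dg).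
Proof. intros; apply (is_derive_plus f g t df dg); auto. Qed.

Lemma is_derive_Rminus (f g : R -> R) t df dg :
  is_derive f t df -> is_derive g t dg -> is_derive (fun x => f x - g x) t (df - dg).
Proof. intros; apply (is_derive_minus f g t df dg); auto. Qed.

Lemma le_of_derive_ge0 (f f' : R -> R) x : 0 <= x ->
  (forall t, 0 <= t <= x -> is_derive f t (f' t)) ->
  (forall t, 0 <= t <= x -> 0 <= f' t) -> f 0 <= f x.
Proof.
  intros [Hx | <-] Hd Hp; [|lra].
  destruct (MVT_cor2 f f' 0 x Hx) as [c [Hc1 Hc2]].
  - intros c Hc; apply is_derive_Reals, Hd; lra.
  - assert (0 <= f' c) by (apply Hp; lra); nra.
Qed.

Lemma ge0_of_derive_ge0 (f f' : R -> R) x : 0 <= x -> f 0 = 0 ->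
  (forall t, 0 <= t -> is_derive f t (f' t)) ->
  (forall t, 0 <= t -> 0 <= f' t) -> 0 <= f x.
Proof.
  intros Hx H0 Hd Hp; rewrite <- H0.
  apply (le_of_derive_ge0 f f'); auto; intros t Ht; [apply Hd | apply Hp]; lra.
Qed.

Lemma Rabs_increment_le (f f' g g' : R -> R) x : 0 <= x ->
  (forall t, 0 <= t <= x -> is_derive f t (f' t)) ->
  (forall t, 0 <= t <= x -> is_derive g t (g' t)) ->
  (forall t, 0 <= t <= x -> Rabs (f' t) <= g' t) ->
  Rabs (f x - f 0) <= g x - g 0.
Proof.
  intros Hx Hf Hg Hb.
  assert (Hminus : g 0 - f 0 <= g x - f x).
  { apply (le_of_derive_ge0 (fun t => g t - f t) (fun t => g' t - f' t)); auto.
    - intros; apply is_derive_Rminus; auto.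
    - intros t Ht; pose proof (Hb t Ht); pose proof (Rle_abs (f' t)); lra. }
  assert (Hplus : g 0 + f 0 <= g x + f x).
  { apply (le_of_derive_ge0 (fun t => g t + f t) (fun t => g' t + f' t)); auto.
    - intros; apply is_derive_Rplus; auto.
    - intros t Ht; pose proof (Hb t Ht); pose proof (Rle_abs (- f' t)).
      rewrite Rabs_Ropp in *; lra. }
  unfold Rabs; destruct Rcase_abs; lra.
Qed.

(* Four successive applications of [Rabs_increment_le], each integrating the
   previous remainder bound against a polynomial comparison function. *)
Lemma taylor3_remainder_le (f0 f1 f2 f3 f4 : R -> R) M :
  (forall t, 0 <= t <= 1 -> is_derive f0 t (f1 t)) ->
  (forall t, 0 <= t <= 1 -> is_derive f1 t (f2 t)) ->
  (forall t, 0 <= t <= 1 -> is_derive f2 t (f3 t)) ->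
  (forall t, 0 <= t <= 1 -> is_derive f3 t (f4 t)) ->
  (forall t, 0 <= t <= 1 -> Rabs (f4 t) <= M) ->
  Rabs (f0 1 - f0 0 - f1 0 - f2 0 / 2 - f3 0 / 6) <= M / 24.
Proof.
  intros H0 H1 H2 H3 HM.
  assert (S3 : forall x, 0 <= x <= 1 -> Rabs (f3 x - f3 0) <= M * x).
  { intros x Hx; replace (M * x) with (M * x - M * 0) by field.
    apply (Rabs_increment_le f3 f4 (fun t => M * t) (fun _ => M)); try lra.
    - intros; apply H3; lra.
    - intros; auto_derive; auto; ring.
    - intros; apply HM; lra. }
  assert (S2 : forall x, 0 <= x <= 1 -> Rabs (f2 x - f2 0 - f3 0 * x) <= M * x ^ 2 / 2).
  { intros x Hx.
    replace (M * x ^ 2 / 2) with (M * x ^ 2 / 2 - M * 0 ^ 2 / 2) by field.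
    replace (f2 x - f2 0 - f3 0 * x) with (f2 x - f3 0 * x - (f2 0 - f3 0 * 0)) by field.
    apply (Rabs_increment_le (fun t => f2 t - f3 0 * t) (fun t => f3 t - f3 0)
             (fun t => M * t ^ 2 / 2) (fun t => M * t)); try lra.
    - intros; apply is_derive_Rminus; [apply H2; lra | auto_derive; auto; ring].
    - intros; auto_derive; auto; field.
    - intros; apply S3; lra. }
  assert (S1 : forall x, 0 <= x <= 1 ->
            Rabs (f1 x - f1 0 - f2 0 * x - f3 0 * x ^ 2 / 2) <= M * x ^ 3 / 6).
  { intros x Hx.
    replace (M * x ^ 3 / 6) with (M * x ^ 3 / 6 - M * 0 ^ 3 / 6) by field.
    replace (f1 x - f1 0 - f2 0 * x - f3 0 * x ^ 2 / 2)
      with (f1 x - (f2 0 * x + f3 0 * x ^ 2 / 2) - (f1 0 - (f2 0 * 0 + f3 0 * 0 ^ 2 / 2))) by field.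
    apply (Rabs_increment_le (fun t => f1 t - (f2 0 * t + f3 0 * t ^ 2 / 2))
             (fun t => f2 t - (f2 0 + f3 0 * t)) (fun t => M * t ^ 3 / 6)
             (fun t => M * t ^ 2 / 2)); try lra.
    - intros; apply is_derive_Rminus; [apply H1; lra | auto_derive; auto; field].
    - intros; auto_derive; auto; field.
    - intros t Ht; replace (f2 t - (f2 0 + f3 0 * t)) with (f2 t - f2 0 - f3 0 * t) by field.
      apply S2; lra. }
  replace (M / 24) with (M * 1 ^ 4 / 24 - M * 0 ^ 4 / 24) by field.
  replace (f0 1 - f0 0 - f1 0 - f2 0 / 2 - f3 0 / 6) with
    (f0 1 - (f1 0 * 1 + f2 0 * 1 ^ 2 / 2 + f3 0 * 1 ^ 3 / 6)
     - (f0 0 - (f1 0 * 0 + f2 0 * 0 ^ 2 / 2 + f3 0 * 0 ^ 3 / 6))) by field.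
  apply (Rabs_increment_le (fun t => f0 t - (f1 0 * t + f2 0 * t ^ 2 / 2 + f3 0 * t ^ 3 / 6))
           (fun t => f1 t - (f1 0 + f2 0 * t + f3 0 * t ^ 2 / 2))
           (fun t => M * t ^ 4 / 24) (fun t => M * t ^ 3 / 6)); try lra.
  - intros; apply is_derive_Rminus; [apply H0; lra | auto_derive; auto; field].
  - intros; auto_derive; auto; field.
  - intros t Ht.
    replace (f1 t - (f1 0 + f2 0 * t + f3 0 * t ^ 2 / 2))
      with (f1 t - f1 0 - f2 0 * t - f3 0 * t ^ 2 / 2) by field.
    apply S1; lra.
Qed.

Lemma cosh_ge1 y : 1 <= cosh y.
Proof.
  unfold cosh; pose proof (exp_pos y); pose proof (exp_pos (- y)).
  assert (exp y * exp (- y) = 1) by (rewrite <- exp_plus, Rplus_opp_r; apply exp_0).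
  pose proof (Rle_0_sqr (exp y - exp (- y))); unfold Rsqr in *; nra.
Qed.

Lemma sinh_ge y : 0 <= y -> y <= sinh y.
Proof.
  intros Hy; cut (0 <= sinh y - y); [lra|].
  apply (ge0_of_derive_ge0 (fun t => sinh t - t) (fun t => cosh t - 1)); auto.
  - now rewrite sinh_0, Rminus_0_r.
  - intros; unfold sinh, cosh; auto_derive; auto; field.
  - intros t _; pose proof (cosh_ge1 t); lra.
Qed.

(* The sixth-order term of the Taylor series of [y^2 + y sinh y - 4 cosh y + 4],
   whose lower-order terms cancel; obtained by integrating [sinh_ge] four times. *)
Lemma cosh_sinh_sextic_le y : 0 <= y -> y ^ 6 / 360 <= y ^ 2 + y * sinh y - 4 * cosh y + 4.
Proof.
  intros Hy.
  assert (P3 : forall t, 0 <= t -> 0 <= t * cosh t - sinh t - t ^ 3 / 3).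
  { intros t Ht.
    apply (ge0_of_derive_ge0 (fun t => t * cosh t - sinh t - t ^ 3 / 3) (fun t => t * sinh t - t ^ 2)); auto.
    - cbv beta; rewrite sinh_0, cosh_0; field.
    - intros; unfold sinh, cosh; auto_derive; auto; field.
    - intros s Hs; pose proof (sinh_ge s Hs); nra. }
  assert (P2 : forall t, 0 <= t -> 0 <= 2 + t * sinh t - 2 * cosh t - t ^ 4 / 12).
  { intros t Ht.
    apply (ge0_of_derive_ge0 (fun t => 2 + t * sinh t - 2 * cosh t - t ^ 4 / 12)
             (fun t => t * cosh t - sinh t - t ^ 3 / 3)); auto.
    - cbv beta; rewrite sinh_0, cosh_0; field.
    - intros; unfold sinh, cosh; auto_derive; auto; field. }
  assert (P1 : forall t, 0 <= t -> 0 <= 2 * t + t * cosh t - 3 * sinh t - t ^ 5 / 60).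
  { intros t Ht.
    apply (ge0_of_derive_ge0 (fun t => 2 * t + t * cosh t - 3 * sinh t - t ^ 5 / 60)
             (fun t => 2 + t * sinh t - 2 * cosh t - t ^ 4 / 12)); auto.
    - cbv beta; rewrite sinh_0, cosh_0; field.
    - intros; unfold sinh, cosh; auto_derive; auto; field. }
  cut (0 <= y ^ 2 + y * sinh y - 4 * cosh y + 4 - y ^ 6 / 360); [lra|].
  apply (ge0_of_derive_ge0 (fun t => t ^ 2 + t * sinh t - 4 * cosh t + 4 - t ^ 6 / 360)
           (fun t => 2 * t + t * cosh t - 3 * sinh t - t ^ 5 / 60)); auto.
  - cbv beta; rewrite sinh_0, cosh_0; field.
  - intros; unfold sinh, cosh; auto_derive; auto; field.
Qed.

Lemma cos_ge_quadratic x : 0 <= x -> 1 - x ^ 2 / 2 <= cos x.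
Proof.
  intros Hx; cut (0 <= cos x - 1 + x ^ 2 / 2); [lra|].
  apply (ge0_of_derive_ge0 (fun t => cos t - 1 + t ^ 2 / 2) (fun t => t - sin t)); auto.
  - cbv beta; rewrite cos_0; field.
  - intros; auto_derive; auto; field.
  - intros t [Ht | <-]; [pose proof (sin_lt_x t Ht) | rewrite sin_0]; lra.
Qed.

Lemma sin_ge_cubic x : 0 <= x -> x - x ^ 3 / 6 <= sin x.
Proof.
  intros Hx; cut (0 <= sin x - x + x ^ 3 / 6); [lra|].
  apply (ge0_of_derive_ge0 (fun t => sin t - t + t ^ 3 / 6) (fun t => cos t - 1 + t ^ 2 / 2)); auto.
  - cbv beta; rewrite sin_0; field.
  - intros; auto_derive; auto; field.
  - intros t Ht; pose proof (cos_ge_quadratic t Ht); lra.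
Qed.

(** * Taylor expansions at the origin *)

(* [Re (c * Cexp (t * w))] for [c = A + i B] and [w = x + i y]. *)
Definition Re_cexp_ray (x y A B t : R) : R :=
  exp (t * x) * (A * cos (t * y) - B * sin (t * y)).

Lemma is_derive_Re_cexp_ray x y A B t :
  is_derive (Re_cexp_ray x y A B) t (Re_cexp_ray x y (A * x - B * y) (A * y + B * x) t).
Proof. unfold Re_cexp_ray; auto_derive; auto; ring. Qed.

Lemma Rabs_Re_cexp_ray_le x y A B t : 0 <= t <= 1 -> x <= 1 ->
  Rabs (Re_cexp_ray x y A B t) <= 3 * sqrt (A * A + B * B).
Proof.
  intros Ht Hx; unfold Re_cexp_ray; rewrite Rabs_mult, Rabs_right by (left; apply exp_pos).
  assert (Hexp : exp (t * x) <= 3).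
  { apply Rle_trans with (exp 1); [|apply exp_le_3].
    destruct (Rle_lt_dec 0 x); [|left; apply exp_increasing; nra].
    destruct (Req_dec (t * x) 1) as [-> | ]; [lra | left; apply exp_increasing; nra]. }
  apply Rmult_le_compat; try lra; [left; apply exp_pos | apply Rabs_pos |].
  apply Rle_of_sqr_le; [apply sqrt_pos|]; rewrite sqrt_sqrt by nra.
  rewrite <- Rabs_mult, Rabs_right by (apply Rle_ge, Rle_0_sqr).
  pose proof (sin2_cos2 (t * y)); pose proof (Rle_0_sqr (A * sin (t * y) + B * cos (t * y))).
  unfold Rsqr in *; nra.
Qed.

Definition Cexp_taylor3 (w : C) : C :=
  Cadd (Cadd (Cadd (RtoC 1) w) (Cmul (RtoC (1/2)) (Cmul w w)))
       (Cmul (RtoC (1/6)) (Cmul (Cmul w w) w)).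

Lemma Rabs_Re_Cexp_taylor3_remainder_le (c w : C) : Re w <= 1 ->
  Rabs (Re (Cmul c (Csub (Cexp w) (Cexp_taylor3 w)))) <= Cnorm c * Cnorm w ^ 4 / 8.
Proof.
  intros Hx; set (x := Re w); set (y := Im w).
  set (c1 := Cmul c w); set (c2 := Cmul c1 w); set (c3 := Cmul c2 w); set (c4 := Cmul c3 w).
  assert (Hd : forall d t, is_derive (Re_cexp_ray x y (Re d) (Im d)) t
                             (Re_cexp_ray x y (Re (Cmul d w)) (Im (Cmul d w)) t)).
  { intros d t; replace (Re (Cmul d w)) with (Re d * x - Im d * y) by (unfold x, y; simpl; ring).
    replace (Im (Cmul d w)) with (Re d * y + Im d * x) by (unfold x, y; simpl; ring).
    apply is_derive_Re_cexp_ray. }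
  assert (H0 : forall d, Re_cexp_ray x y (Re d) (Im d) 0 = Re d).
  { intros d; unfold Re_cexp_ray; rewrite !Rmult_0_l, exp_0, cos_0, sin_0; ring. }
  pose proof (taylor3_remainder_le
    (Re_cexp_ray x y (Re c) (Im c)) (Re_cexp_ray x y (Re c1) (Im c1))
    (Re_cexp_ray x y (Re c2) (Im c2)) (Re_cexp_ray x y (Re c3) (Im c3))
    (Re_cexp_ray x y (Re c4) (Im c4)) (3 * Cnorm c4)) as T.
  rewrite !H0 in T.
  replace (Re_cexp_ray x y (Re c) (Im c) 1) with (Re (Cmul c (Cexp w))) in T
    by (unfold Re_cexp_ray, Cexp; simpl; fold x y; rewrite !Rmult_1_l; ring).
  replace (Re (Cmul c (Csub (Cexp w) (Cexp_taylor3 w))))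
    with (Re (Cmul c (Cexp w)) - Re c - Re c1 - Re c2 / 2 - Re c3 / 6)
    by (unfold c3, c2, c1, Cexp_taylor3; simpl; field).
  replace (Cnorm c * Cnorm w ^ 4 / 8) with (3 * Cnorm c4 / 24)
    by (unfold c4, c3, c2, c1; rewrite !Cnorm_mul; field).
  apply T; intros; try apply Hd.
  now apply Rabs_Re_cexp_ray_le.
Qed.

Lemma Cexp_taylor3_remainder_le (w : C) : Re w <= 1 ->
  Cnorm (Csub (Cexp w) (Cexp_taylor3 w)) <= Cnorm w ^ 4 / 4.
Proof.
  intros Hx; eapply Rle_trans; [apply Cnorm_le_Rabs_Re_Im|].
  pose proof (Rabs_Re_Cexp_taylor3_remainder_le (RtoC 1) w Hx) as HRe.
  pose proof (Rabs_Re_Cexp_taylor3_remainder_le (mkC 0 (-1)) w Hx) as HIm.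
  rewrite Cnorm_RtoC, Rabs_R1 in HRe.
  replace (Cnorm (mkC 0 (-1))) with 1 in HIm
    by (unfold Cnorm; simpl; replace (0 * 0 + -1 * -1) with 1 by ring; now rewrite sqrt_1).
  replace (Re (Cmul (RtoC 1) (Csub (Cexp w) (Cexp_taylor3 w))))
    with (Re (Csub (Cexp w) (Cexp_taylor3 w))) in HRe by (simpl; ring).
  replace (Re (Cmul (mkC 0 (-1)) (Csub (Cexp w) (Cexp_taylor3 w))))
    with (Im (Csub (Cexp w) (Cexp_taylor3 w))) in HIm by (simpl; ring).
  lra.
Qed.

Lemma Cexp_double_remainder_le k : Cnorm k <= 1/2 ->
  Cnorm (Csub (Cexp (Cmul (RtoC 2) k)) (Cexp_taylor3 (Cmul (RtoC 2) k)))
    <= 4 * (Cnorm k * Cnorm k * Cnorm k * Cnorm k).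
Proof.
  intros Hk; pose proof (Cnorm_ge0 k).
  assert (H2k : Cnorm (Cmul (RtoC 2) k) = 2 * Cnorm k)
    by (rewrite Cnorm_scale, Rabs_right by lra; reflexivity).
  eapply Rle_trans; [apply Cexp_taylor3_remainder_le|].
  - pose proof (Rabs_Re_le (Cmul (RtoC 2) k)); pose proof (Rle_abs (Re (Cmul (RtoC 2) k))); lra.
  - rewrite H2k; right; simpl; field.
Qed.

Section TanhNearZero.

Variable k : C.
Hypothesis Hk : Cnorm k <= 1/4.

Let rho := Cnorm k.
Let e := Cexp (Cmul (RtoC 2) k).
Let R0 := Csub e (Cexp_taylor3 (Cmul (RtoC 2) k)).

Lemma Cexp_double_decomp : e = Cadd (Cexp_taylor3 (Cmul (RtoC 2) k)) R0.
Proof. unfold R0; ring. Qed.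

Lemma Cnorm_Cexp_double_add1_ge1 : 1 <= Cnorm (Cadd e (RtoC 1)).
Proof.
  assert (Hr : 0 <= rho) by apply Cnorm_ge0.
  assert (Hr1 : rho <= 1/4) by exact Hk.
  pose proof (Cexp_double_remainder_le k ltac:(lra)) as HR; fold rho e in HR; fold R0 in HR.
  set (X := Cadd (Cadd (Cadd (Cmul (RtoC 2) k) (Cmul (RtoC 2) (Cmul k k)))
                       (Cmul (RtoC (4/3)) (Cmul (Cmul k k) k))) R0).
  assert (HX : Cadd e (RtoC 1) = Cadd (RtoC 2) X)
    by (rewrite Cexp_double_decomp; unfold X, Cexp_taylor3; apply C_ext; simpl; field).
  assert (HXn : Cnorm X <= 2 * rho + 2 * (rho * rho) + 4/3 * (rho * rho * rho) + Cnorm R0).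
  { unfold X; eapply Rle_trans; [apply Cnorm_triangle4|].
    rewrite !Cnorm_scale, !Cnorm_mul, !Rabs_right by lra; fold rho; lra. }
  rewrite HX; pose proof (Cnorm_add_ge (RtoC 2) X).
  rewrite Cnorm_RtoC, Rabs_right in * by lra.
  assert (rho * rho <= rho / 4) by nra.
  assert (rho * rho * rho <= rho * rho / 4) by nra.
  assert (rho * rho * rho * rho <= rho * rho * rho / 4) by nra.
  lra.
Qed.

(* [tanh k - p = ((e - 1) - p (e + 1)) / (e + 1)]; the numerator is [O(k^4)]
   because [p = k - k^3/3] is the cubic Taylor polynomial of [tanh]. *)
Lemma Ctanh_sub_cubic_le :
  Cnorm (Csub (Ctanh k) (Csub k (Cmul (RtoC (1/3)) (Cmul (Cmul k k) k)))) <= 6 * rho ^ 4.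
Proof.
  assert (Hr : 0 <= rho) by apply Cnorm_ge0.
  assert (Hr1 : rho <= 1/4) by exact Hk.
  pose proof (Cexp_double_remainder_le k ltac:(lra)) as HR; fold rho e in HR; fold R0 in HR.
  pose proof Cnorm_Cexp_double_add1_ge1 as Hd.
  assert (Hnz : Cadd e (RtoC 1) <> RtoC 0) by (apply Cnorm_neq0; lra).
  set (I := Cinv (Cadd e (RtoC 1))).
  assert (HIn : Cnorm I <= 1).
  { unfold I; rewrite Cnorm_Cinv by auto.
    apply Rle_trans with (/ 1); [apply Rinv_le_contravar | rewrite Rinv_1]; lra. }
  set (p := Csub k (Cmul (RtoC (1/3)) (Cmul (Cmul k k) k))).
  set (N := Cadd (Cadd (Cadd
        (Cmul R0 (Cadd (Csub (RtoC 1) k) (Cmul (RtoC (1/3)) (Cmul (Cmul k k) k))))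
        (Cmul (RtoC (-2/3)) (Cmul (Cmul (Cmul k k) k) k)))
        (Cmul (RtoC (2/3)) (Cmul (Cmul (Cmul (Cmul k k) k) k) k)))
        (Cmul (RtoC (4/9)) (Cmul (Cmul (Cmul (Cmul (Cmul k k) k) k) k) k))).
  assert (HN : Csub (Ctanh k) p = Cmul N I).
  { assert (HNe : Csub (Csub e (RtoC 1)) (Cmul p (Cadd e (RtoC 1))) = N)
      by (rewrite Cexp_double_decomp; unfold N, p, Cexp_taylor3; apply C_ext; simpl; field).
    change (Ctanh k) with (Cmul (Csub e (RtoC 1)) I).
    rewrite <- HNe; pose proof (Cmul_Cinv_r _ Hnz) as HI; fold I in HI.
    transitivity (Csub (Cmul (Csub e (RtoC 1)) I) (Cmul p (Cmul (Cadd e (RtoC 1)) I)));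
      [rewrite HI|]; ring. }
  assert (HNn : Cnorm N <= 6 * rho ^ 4).
  { assert (Hq : Cnorm (Cadd (Csub (RtoC 1) k) (Cmul (RtoC (1/3)) (Cmul (Cmul k k) k)))
                 <= 1 + rho + rho * rho * rho / 3).
    { eapply Rle_trans; [apply Cnorm_triangle|].
      pose proof (Cnorm_sub_le (RtoC 1) k) as H1k; rewrite Cnorm_RtoC, Rabs_R1 in H1k.
      rewrite !Cnorm_scale, !Cnorm_mul, Rabs_right by lra; fold rho in H1k |- *; lra. }
    unfold N; eapply Rle_trans; [apply Cnorm_triangle4|].
    rewrite (Cnorm_mul R0), !Cnorm_scale, !Cnorm_mul; fold rho.
    replace (Rabs (-2/3)) with (2/3) by (rewrite Rabs_left by lra; field).
    rewrite !Rabs_right by lra.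
    assert (Cnorm R0 * Cnorm (Cadd (Csub (RtoC 1) k) (Cmul (RtoC (1/3)) (Cmul (Cmul k k) k)))
            <= 4 * (rho * rho * rho * rho) * (1 + rho + rho * rho * rho / 3))
      by (apply Rmult_le_compat; auto; apply Cnorm_ge0).
    assert (rho * rho <= rho / 4) by nra.
    assert (rho * rho * rho <= rho * rho / 4) by nra.
    assert (rho ^ 4 <= rho * rho * rho / 4) by (simpl; nra).
    assert (rho ^ 5 <= rho ^ 4 / 4) by (simpl; nra).
    assert (rho ^ 6 <= rho ^ 5 / 4) by (simpl; nra).
    simpl in *; nra. }
  fold p; rewrite HN, Cnorm_mul.
  pose proof (Cnorm_ge0 N); pose proof (Cnorm_ge0 I).
  assert (Cnorm N * Cnorm I <= 6 * rho ^ 4 * 1) by (apply Rmult_le_compat; auto).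
  lra.
Qed.

End TanhNearZero.

Definition m_beta_sqr (beta : R) (k : C) : C :=
  Cdiv (Cmul (Cadd (RtoC 1) (Cmul (RtoC beta) (Cmul k k))) (Ctanh k)) k.

Lemma m_beta_Csqrt beta k : m_beta beta k = Csqrt (m_beta_sqr beta k).
Proof. reflexivity. Qed.

(* The error is in fact [O(k^4)]; the division by [k] costs one power here. *)
Lemma m_beta_sqr_taylor_le beta k : 0 < beta < 1/3 -> k <> RtoC 0 -> Cnorm k <= 1/4 ->
  Cnorm (Cadd (Csub (m_beta_sqr beta k) (RtoC 1)) (Cmul (RtoC (2 * gamma_beta beta)) (Cmul k k)))
    <= 7 * (Cnorm k * Cnorm k * Cnorm k).
Proof.
  intros Hb Hk0 Hk; pose proof (Ctanh_sub_cubic_le k Hk) as HT.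
  set (rho := Cnorm k) in *; assert (Hr : 0 < rho) by (apply Cnorm_pos; auto).
  set (P := Cadd (RtoC 1) (Cmul (RtoC beta) (Cmul k k))).
  set (p := Csub k (Cmul (RtoC (1/3)) (Cmul (Cmul k k) k))) in *.
  set (T := Ctanh k) in *.
  set (k5 := Cmul (Cmul (Cmul (Cmul k k) k) k) k).
  assert (Hki : Cmul k (Cinv k) = RtoC 1) by (apply Cmul_Cinv_r; auto).
  assert (E : Cadd (Csub (m_beta_sqr beta k) (RtoC 1)) (Cmul (RtoC (2 * gamma_beta beta)) (Cmul k k))
              = Cmul (Csub (Cmul P (Csub T p)) (Cmul (RtoC (beta / 3)) k5)) (Cinv k)).
  { change (m_beta_sqr beta k) with (Cmul (Cmul P T) (Cinv k)).
    transitivity (Cadd (Cmul (Csub (Cmul P (Csub T p)) (Cmul (RtoC (beta / 3)) k5)) (Cinv k))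
      (Cmul (Csub (Cmul k (Cinv k)) (RtoC 1))
            (Cadd (RtoC 1) (Cmul (RtoC (beta - 1/3)) (Cmul k k))))).
    - set (ki := Cinv k); clearbody T ki; unfold P, p, k5, gamma_beta; apply C_ext; simpl; field.
    - rewrite Hki; ring. }
  rewrite E, Cnorm_mul, Cnorm_Cinv by auto; fold rho.
  assert (HP : Cnorm P <= 1 + rho * rho / 3).
  { unfold P; eapply Rle_trans; [apply Cnorm_triangle|].
    rewrite Cnorm_RtoC, Cnorm_scale, Cnorm_mul, Rabs_R1, Rabs_right by lra; fold rho; nra. }
  assert (HPT : Cnorm P * Cnorm (Csub T p) <= (1 + rho * rho / 3) * (6 * rho ^ 4))
    by (apply Rmult_le_compat; try apply Cnorm_ge0; auto).
  assert (Hk5 : Cnorm (Cmul (RtoC (beta / 3)) k5) <= rho ^ 5 / 9).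
  { unfold k5; rewrite Cnorm_scale, !Cnorm_mul, Rabs_right by lra; fold rho.
    assert (0 <= rho ^ 5) by (apply pow_le; lra); simpl in *; nra. }
  pose proof (Cnorm_sub_le (Cmul P (Csub T p)) (Cmul (RtoC (beta / 3)) k5)) as Hsub.
  rewrite Cnorm_mul in Hsub.
  apply Rle_trans with (((1 + rho * rho / 3) * (6 * rho ^ 4) + rho ^ 5 / 9) * / rho).
  - apply Rmult_le_compat_r; [left; apply Rinv_0_lt_compat|]; lra.
  - replace (((1 + rho * rho / 3) * (6 * rho ^ 4) + rho ^ 5 / 9) * / rho)
      with ((1 + rho * rho / 3) * 6 * (rho * rho * rho) + rho ^ 4 / 9) by (field; lra).
    assert (rho * rho <= 1/16) by nra.
    assert (0 <= rho * rho * rho) by (repeat apply Rmult_le_pos; lra).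
    simpl; nra.
Qed.

(** * [m_beta^2] off the real axis *)

(* [|e^(2k) + 1|^2] for [k = a + i b] *)
Definition tanh_den (a b : R) : R :=
  exp (2 * a) * exp (2 * a) + 2 * exp (2 * a) * cos (2 * b) + 1.

Definition m_sqr_re_num (beta a b : R) : R :=
  a * (1 + beta * (a * a + b * b)) * (exp (2 * a) * exp (2 * a) - 1)
  - 2 * b * (beta * (a * a + b * b) - 1) * exp (2 * a) * sin (2 * b).

Definition m_sqr_im_num (beta a b : R) : R :=
  2 * a * (1 + beta * (a * a + b * b)) * exp (2 * a) * sin (2 * b)
  + b * (beta * (a * a + b * b) - 1) * (exp (2 * a) * exp (2 * a) - 1).

Lemma Ctanh_mkC a b : tanh_den a b <> 0 ->
  Ctanh (mkC a b) = mkC ((exp (2 * a) * exp (2 * a) - 1) / tanh_den a b)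
                        (2 * exp (2 * a) * sin (2 * b) / tanh_den a b).
Proof.
  intros HW; set (u := exp (2 * a)).
  pose proof (sin2_cos2 (2 * b)) as Hsc; unfold Rsqr in Hsc.
  assert (Hd : (u * cos (2 * b) + 1) * (u * cos (2 * b) + 1)
               + u * sin (2 * b) * (u * sin (2 * b)) = tanh_den a b)
    by (unfold tanh_den; fold u; nra).
  unfold Ctanh, Cdiv, Cinv, Cexp; apply C_ext; simpl;
    replace (2 * a - 0 * b) with (2 * a) by ring; replace (2 * b + 0 * a) with (2 * b) by ring;
    rewrite ?Rplus_0_r, ?Rminus_0_r; fold u; rewrite Hd; field_simplify; auto.
  f_equal; nra.
Qed.

Lemma m_beta_sqr_mkC beta a b : 0 < b -> tanh_den a b <> 0 ->
  m_beta_sqr beta (mkC a b)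
  = mkC (m_sqr_re_num beta a b / (tanh_den a b * (a * a + b * b)))
        (m_sqr_im_num beta a b / (tanh_den a b * (a * a + b * b))).
Proof.
  intros Hb HW; assert (Hr : a * a + b * b <> 0) by nra.
  unfold m_beta_sqr, Cdiv; rewrite Ctanh_mkC by auto.
  unfold Cinv, m_sqr_re_num, m_sqr_im_num; apply C_ext; simpl; field; auto.
Qed.

Lemma sin_cos_double_bounds b : 0 < b <= 1/4 ->
  2 * b - 4/3 * (b * b * b) <= sin (2 * b) <= 2 * b /\ 1 - 2 * (b * b) <= cos (2 * b) <= 1.
Proof.
  intros Hb.
  pose proof (sin_ge_cubic (2 * b) ltac:(lra)); pose proof (sin_lt_x (2 * b) ltac:(lra)).
  pose proof (cos_ge_quadratic (2 * b) ltac:(lra)); pose proof (COS_bound (2 * b)).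
  simpl in *; split; split; nra.
Qed.

Lemma sin_double_ge0 b : 0 < b <= 1/4 -> 0 <= sin (2 * b).
Proof.
  intros Hb; destruct (sin_cos_double_bounds b Hb) as [[HS _] _].
  assert (b * b <= 1/16) by nra; nra.
Qed.

Lemma tanh_den_pos a b : 0 < b <= 1/4 -> 0 < tanh_den a b.
Proof.
  intros Hb; destruct (sin_cos_double_bounds b Hb) as [_ [Hc _]].
  assert (b * b <= 1/16) by nra.
  unfold tanh_den; pose proof (exp_pos (2 * a)); nra.
Qed.

Lemma Cnorm_m_beta_sqr_sub_reflect beta a b c : 0 < b <= 1/4 ->
  Cnorm (Csub (m_beta_sqr beta (mkC (- a) b)) (RtoC c))
  = Cnorm (Csub (m_beta_sqr beta (mkC a b)) (RtoC c)).
Proof.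
  intros Hb; pose proof (tanh_den_pos a b Hb); pose proof (tanh_den_pos (- a) b Hb).
  rewrite !m_beta_sqr_mkC by lra.
  assert (Hu : 0 < exp (2 * a)) by apply exp_pos.
  assert (Hneg : exp (2 * - a) = / exp (2 * a))
    by (rewrite <- exp_Ropp; f_equal; ring).
  assert (HW : tanh_den (- a) b = tanh_den a b / (exp (2 * a) * exp (2 * a)))
    by (unfold tanh_den; rewrite Hneg; field; lra).
  unfold Cnorm; simpl; f_equal.
  rewrite HW; unfold m_sqr_re_num, m_sqr_im_num; rewrite Hneg.
  replace (- a * - a + b * b) with (a * a + b * b) by ring.
  field; nra.
Qed.

Section UpperBound.

Variables beta a b : R.
Hypothesis Hbeta : 0 <= beta.
Hypothesis Ha : 0 <= a.
Hypothesis Hb : 0 < b <= 1/4.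

Let u := exp (2 * a).
Let S := sin (2 * b).
Let r := a * a + b * b.
Let W := tanh_den a b.

Lemma tanh_den_bounds : 2 * u <= W /\ 0 <= u * u - 1 <= W.
Proof.
  destruct (sin_cos_double_bounds b Hb) as [_ [HC _]].
  assert (Hu : 1 <= u) by (pose proof (exp_ineq1_le (2 * a)); unfold u; lra).
  assert (b * b <= 1/16) by nra.
  assert (0 <= u * cos (2 * b)) by (apply Rmult_le_pos; lra).
  unfold W, tanh_den; fold u; split; [|split]; nra.
Qed.

Lemma Rabs_m_sqr_re_num_le : Rabs (m_sqr_re_num beta a b) <= (1 + beta * r) * W * (a + 2 * (b * b)).
Proof.
  destruct (sin_cos_double_bounds b Hb) as [[_ HS] _]; fold S in HS.
  pose proof (sin_double_ge0 b Hb) as HS0; fold S in HS0.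
  pose proof tanh_den_bounds as [H2u Hu2].
  assert (Hu0 : 0 < u) by apply exp_pos.
  assert (Hbr : 0 <= beta * r) by (unfold r; nra).
  assert (Hr : Rabs (beta * r - 1) <= 1 + beta * r) by (unfold Rabs; destruct Rcase_abs; lra).
  unfold m_sqr_re_num; fold u S r.
  eapply Rle_trans; [apply Rabs_triang|].
  rewrite Rabs_Ropp, !Rabs_mult, (Rabs_right a), (Rabs_right (1 + beta * r)),
    (Rabs_right (u * u - 1)), (Rabs_right u), (Rabs_right S), (Rabs_right 2), (Rabs_right b)
    by lra.
  assert (a * (1 + beta * r) * (u * u - 1) <= a * (1 + beta * r) * W)
    by (apply Rmult_le_compat_l; nra).
  assert (2 * b * Rabs (beta * r - 1) * u * S <= (b * b * 2) * (1 + beta * r) * (2 * u)).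
  { replace (2 * b * Rabs (beta * r - 1) * u * S) with ((2 * b * u) * (Rabs (beta * r - 1) * S)) by ring.
    replace ((b * b * 2) * (1 + beta * r) * (2 * u)) with ((2 * b * u) * ((1 + beta * r) * (2 * b))) by ring.
    apply Rmult_le_compat_l; [nra|].
    apply Rmult_le_compat; try lra; apply Rabs_pos. }
  assert ((b * b * 2) * (1 + beta * r) * (2 * u) <= (b * b * 2) * (1 + beta * r) * W)
    by (apply Rmult_le_compat_l; [apply Rmult_le_pos; nra | lra]).
  nra.
Qed.

Lemma Rabs_m_sqr_im_num_le : Rabs (m_sqr_im_num beta a b) <= (1 + beta * r) * W * (2 * a * b + b).
Proof.
  destruct (sin_cos_double_bounds b Hb) as [[_ HS] _]; fold S in HS.
  pose proof (sin_double_ge0 b Hb) as HS0; fold S in HS0.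
  pose proof tanh_den_bounds as [H2u Hu2].
  assert (Hu0 : 0 < u) by apply exp_pos.
  assert (Hbr : 0 <= beta * r) by (unfold r; nra).
  assert (Hr : Rabs (beta * r - 1) <= 1 + beta * r) by (unfold Rabs; destruct Rcase_abs; lra).
  unfold m_sqr_im_num; fold u S r.
  eapply Rle_trans; [apply Rabs_triang|].
  rewrite !Rabs_mult, (Rabs_right a), (Rabs_right (1 + beta * r)), (Rabs_right (u * u - 1)),
    (Rabs_right u), (Rabs_right S), (Rabs_right 2), (Rabs_right b)
    by lra.
  assert (2 * a * (1 + beta * r) * u * S <= a * (1 + beta * r) * W * (2 * b)).
  { replace (2 * a * (1 + beta * r) * u * S) with ((a * (1 + beta * r)) * ((2 * u) * S)) by ring.
    replace (a * (1 + beta * r) * W * (2 * b)) with ((a * (1 + beta * r)) * (W * (2 * b))) by ring.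
    apply Rmult_le_compat_l; [nra|].
    apply Rmult_le_compat; lra. }
  assert (b * Rabs (beta * r - 1) * (u * u - 1) <= b * ((1 + beta * r) * W)).
  { rewrite Rmult_assoc; apply Rmult_le_compat_l; [lra|].
    apply Rmult_le_compat; try lra; apply Rabs_pos. }
  nra.
Qed.

Lemma Cnorm_m_beta_sqr_le : Cnorm (m_beta_sqr beta (mkC a b)) <= 2 * (/ r + beta) * (1 + a).
Proof.
  pose proof (tanh_den_pos a b Hb) as HW0.
  assert (Hr : 0 < r) by (unfold r; nra).
  rewrite m_beta_sqr_mkC by (lra || apply Rgt_not_eq, HW0); fold W r; fold W in HW0.
  eapply Rle_trans; [apply Cnorm_le_Rabs_Re_Im|]; simpl.
  unfold Rdiv; rewrite !Rabs_mult, (Rabs_right (/ (W * r)))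
    by (left; apply Rinv_0_lt_compat; nra).
  pose proof Rabs_m_sqr_re_num_le; pose proof Rabs_m_sqr_im_num_le.
  assert (HWr : 0 < / (W * r)) by (apply Rinv_0_lt_compat; nra).
  apply Rle_trans with
    (((1 + beta * r) * W * (a + 2 * (b * b)) + (1 + beta * r) * W * (2 * a * b + b)) * / (W * r)).
  - rewrite Rmult_plus_distr_r; apply Rplus_le_compat; apply Rmult_le_compat_r; lra.
  - replace (((1 + beta * r) * W * (a + 2 * (b * b)) + (1 + beta * r) * W * (2 * a * b + b)) * / (W * r))
      with ((/ r + beta) * (a + 2 * (b * b) + 2 * a * b + b)) by (field; lra).
    assert (0 <= / r + beta) by (pose proof (Rinv_0_lt_compat r Hr); lra).
    assert (a + 2 * (b * b) + 2 * a * b + b <= 2 * (1 + a)) by nra.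
    replace (2 * (/ r + beta) * (1 + a)) with ((/ r + beta) * (2 * (1 + a))) by ring.
    apply Rmult_le_compat_l; lra.
Qed.

End UpperBound.

Lemma exp_double_sextic_le a : 0 <= a ->
  exp (2 * a) * (2 * a) ^ 6 / 360
    <= - 2 * (exp (2 * a) - 1) ^ 2 + a * (4 * a * exp (2 * a) + exp (2 * a) * exp (2 * a) - 1).
Proof.
  intros Ha; pose proof (cosh_sinh_sextic_le (2 * a) ltac:(lra)) as H; unfold sinh, cosh in H.
  set (u := exp (2 * a)) in *.
  assert (Hu : 0 < u) by apply exp_pos.
  rewrite exp_Ropp in H; fold u in H.
  apply (Rmult_le_compat_l u) in H; [|lra].
  replace (u * ((2 * a) ^ 2 + 2 * a * ((u - / u) / 2) - 4 * ((u + / u) / 2) + 4))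
    with (- 2 * (u - 1) ^ 2 + a * (4 * a * u + u * u - 1)) in H by (field; lra).
  lra.
Qed.

Lemma middle_main_term_ge a u a0 : 0 < a0 <= a -> 1 <= u ->
  u * (2 * a) ^ 6 / 360 <= - 2 * (u - 1) ^ 2 + a * (4 * a * u + u * u - 1) ->
  2 * (a0 * (2 * a0) ^ 6 / 180)
    <= - 2 * a * (u * u - 1) ^ 2 + a * a * (4 * a * u + u * u - 1) * ((u + 1) * (u + 1)).
Proof.
  intros Ha Hu Hpsi.
  replace (- 2 * a * (u * u - 1) ^ 2 + a * a * (4 * a * u + u * u - 1) * ((u + 1) * (u + 1)))
    with (a * ((u + 1) * (u + 1)) * (- 2 * (u - 1) ^ 2 + a * (4 * a * u + u * u - 1))) by ring.
  assert (H6 : (2 * a0) ^ 6 <= (2 * a) ^ 6) by (apply pow_incr; lra).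
  assert (0 <= (2 * a0) ^ 6) by (apply pow_le; lra).
  assert (1 * (2 * a0) ^ 6 / 360 <= u * (2 * a) ^ 6 / 360) by
    (unfold Rdiv; apply Rmult_le_compat_r; [lra|]; apply Rmult_le_compat; lra).
  assert (a0 * 4 <= a * ((u + 1) * (u + 1))) by (apply Rmult_le_compat; nra).
  apply Rle_trans with ((a0 * 4) * ((2 * a0) ^ 6 / 360)); [lra|].
  apply Rmult_le_compat; lra.
Qed.

Definition middle_err (A U : R) : R :=
  32 * A * U * U + (8/3) * A * A * A * U * (U + 1) * (U + 1) + 4 * A * A * U * (4 * A * U + U * U).

Lemma middle_err_ge0 A U : 0 <= A -> 0 <= U -> 0 <= middle_err A U.
Proof.
  intros HA HU; unfold middle_err.
  assert (0 <= A * U) by nra; assert (0 <= A * A * A * U) by (repeat apply Rmult_le_pos; lra).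
  assert (0 <= A * A * U) by (repeat apply Rmult_le_pos; lra).
  nra.
Qed.

Lemma middle_err_le a b u A U : 0 <= a <= A -> 1 <= u <= U ->
  a * a * ((8/3) * a * u * (b * b) * ((u + 1) * (u + 1)) + 4 * u * (b * b) * (4 * a * u + u * u - 1))
  + 32 * a * u * u * (b * b) <= b * b * middle_err A U.
Proof.
  intros Ha Hu.
  replace (a * a * ((8/3) * a * u * (b * b) * ((u + 1) * (u + 1)) + 4 * u * (b * b) * (4 * a * u + u * u - 1))
           + 32 * a * u * u * (b * b))
    with (b * b * ((8/3) * (a * a * a * (u * (u + 1) * (u + 1))) + 4 * (a * a * u * (4 * a * u + u * u - 1))
                   + 32 * (a * (u * u)))) by ring.
  unfold middle_err.
  replace (32 * A * U * U + 8 / 3 * A * A * A * U * (U + 1) * (U + 1) + 4 * A * A * U * (4 * A * U + U * U))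
    with ((8/3) * (A * A * A * (U * (U + 1) * (U + 1))) + 4 * (A * A * U * (4 * A * U + U * U))
          + 32 * (A * (U * U))) by ring.
  apply Rmult_le_compat_l; [nra|].
  assert (a * a <= A * A) by (apply Rmult_le_compat; lra).
  assert (a * a * a <= A * A * A) by (apply Rmult_le_compat; try lra; apply Rmult_le_pos; lra).
  assert (u * u <= U * U) by (apply Rmult_le_compat; lra).
  assert (u * (u + 1) * (u + 1) <= U * (U + 1) * (U + 1))
    by (repeat apply Rmult_le_compat; try lra; apply Rmult_le_pos; lra).
  assert (a * (u * u) <= A * (U * U)) by (apply Rmult_le_compat; nra).
  assert (a * a * a * (u * (u + 1) * (u + 1)) <= A * A * A * (U * (U + 1) * (U + 1)))
    by (apply Rmult_le_compat; try lra; repeat apply Rmult_le_pos; lra).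
  assert (a * u <= A * U) by (apply Rmult_le_compat; lra).
  assert (a * a * u <= A * A * U) by (apply Rmult_le_compat; try lra; apply Rmult_le_pos; lra).
  assert (a * a * u * (4 * a * u + u * u) <= A * A * U * (4 * A * U + U * U))
    by (apply Rmult_le_compat; try lra; [repeat apply Rmult_le_pos; lra | nra]).
  assert (0 <= a * a * u) by (repeat apply Rmult_le_pos; lra).
  assert (a * a * u * (4 * a * u + u * u - 1) <= a * a * u * (4 * a * u + u * u))
    by (apply Rmult_le_compat_l; lra).
  lra.
Qed.

(* With [W r (Dm Im F - Nm (Re F - c2))] equal to the right-hand side
   (see [middle_combination_eq]), this is the positivity that rules out
   [F(a + i b) = c2] in the middle range. *)
Lemma middle_combination_ge (a b u S Co c2 A U a0 : R) :
  0 < a0 -> a0 <= a <= A -> 0 < b <= 1/4 -> 1 <= u <= U ->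
  u * (2 * a) ^ 6 / 360 <= - 2 * (u - 1) ^ 2 + a * (4 * a * u + u * u - 1) ->
  2 * b - 4/3 * (b * b * b) <= S <= 2 * b -> 1 - 2 * (b * b) <= Co <= 1 -> 1 <= c2 ->
  b * b * middle_err A U <= a0 * (2 * a0) ^ 6 / 180 ->
  b * (a0 * (2 * a0) ^ 6 / 180)
    <= - 2 * a * b * (u * u - 1) ^ 2 - 8 * a * b * u * u * (S * S)
       + c2 * (2 * a * u * S + b * (u * u - 1)) * (u * u + 2 * u * Co + 1) * (a * a + b * b).
Proof.
  intros Ha0 Ha Hb Hu Hpsi [HS1 HS2] HCo Hc2 Hb0.
  pose proof (middle_main_term_ge a u a0 ltac:(lra) ltac:(lra) Hpsi) as Hmain.
  pose proof (middle_err_le a b u A U ltac:(lra) Hu) as Herr.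
  assert (Hbb : b * b <= 1/16) by nra.
  assert (Hau : 0 <= a * u) by nra.
  assert (HS0 : 0 <= S) by nra.
  set (L1 := 4 * a * u + u * u - 1 - (8/3) * a * u * (b * b)).
  set (L2 := (u + 1) * (u + 1) - 4 * u * (b * b)).
  assert (HL1 : 0 <= L1) by (unfold L1; nra).
  assert (HL2 : 0 <= L2) by (unfold L2; nra).
  assert (HNm : b * L1 <= 2 * a * u * S + b * (u * u - 1)).
  { assert (2 * a * u * (2 * b - 4/3 * (b * b * b)) <= 2 * a * u * S)
      by (apply Rmult_le_compat_l; nra).
    unfold L1; nra. }
  assert (HP : b * L1 * L2 * (a * a)
               <= c2 * (2 * a * u * S + b * (u * u - 1)) * (u * u + 2 * u * Co + 1) * (a * a + b * b)).
  { assert (0 <= b * L1) by (apply Rmult_le_pos; lra).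
    assert (b * L1 * L2 <= (2 * a * u * S + b * (u * u - 1)) * (u * u + 2 * u * Co + 1))
      by (apply Rmult_le_compat; unfold L2 in *; nra).
    assert (b * L1 * L2 * (a * a)
            <= (2 * a * u * S + b * (u * u - 1)) * (u * u + 2 * u * Co + 1) * (a * a + b * b))
      by (apply Rmult_le_compat; nra).
    assert (0 <= b * L1 * L2 * (a * a)) by (repeat apply Rmult_le_pos; nra).
    nra. }
  assert (HSS : 8 * a * b * u * u * (S * S) <= 8 * a * b * u * u * (4 * (b * b))).
  { assert (0 <= a * b * u * u) by (repeat apply Rmult_le_pos; nra).
    apply Rmult_le_compat_l; nra. }
  assert (HL : L1 * L2 * (a * a) >= a * a * (4 * a * u + u * u - 1) * ((u + 1) * (u + 1))
             - a * a * ((8/3) * a * u * (b * b) * ((u + 1) * (u + 1))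
                        + 4 * u * (b * b) * (4 * a * u + u * u - 1))).
  { assert (0 <= a * a * ((8/3) * a * u * (b * b)) * (4 * u * (b * b)))
      by (repeat apply Rmult_le_pos; nra).
    unfold L1, L2; nra. }
  assert (Hfin : b * (a0 * (2 * a0) ^ 6 / 180) <= b * (- 2 * a * (u * u - 1) ^ 2
             + a * a * (4 * a * u + u * u - 1) * ((u + 1) * (u + 1)) - b * b * middle_err A U))
    by (apply Rmult_le_compat_l; lra).
  assert (b * (L1 * L2 * (a * a)) >= b * (a * a * (4 * a * u + u * u - 1) * ((u + 1) * (u + 1))
             - a * a * ((8/3) * a * u * (b * b) * ((u + 1) * (u + 1))
                        + 4 * u * (b * b) * (4 * a * u + u * u - 1))))
    by (apply Rle_ge, Rmult_le_compat_l; lra).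
  assert (b * (b * b * middle_err A U) >= b * (a * a * ((8/3) * a * u * (b * b) * ((u + 1) * (u + 1))
             + 4 * u * (b * b) * (4 * a * u + u * u - 1)) + 32 * a * u * u * (b * b)))
    by (apply Rle_ge, Rmult_le_compat_l; lra).
  nra.
Qed.

Section MiddleRange.

Variables beta a b c2 A a0 : R.
Hypothesis Ha0 : 0 < a0.
Hypothesis Ha : a0 <= a <= A.
Hypothesis Hb : 0 < b <= 1/4.
Hypothesis Hc2 : 1 <= c2 <= 2.
Hypothesis Hsmall : b * b * middle_err A (exp (2 * A)) <= a0 * (2 * a0) ^ 6 / 180.

Let u := exp (2 * a).
Let U := exp (2 * A).
Let S := sin (2 * b).
Let W := tanh_den a b.
Let r := a * a + b * b.
Let Dm := a * (u * u - 1) - 2 * b * u * S.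
Let Nm := 2 * a * u * S + b * (u * u - 1).
Let F := m_beta_sqr beta (mkC a b).

(* The [beta]-dependent parts of [Re F] and [Im F] cancel in this combination. *)
Lemma middle_combination_eq :
  W * r * (Dm * Im F - Nm * (Re F - c2))
  = - 2 * a * b * (u * u - 1) ^ 2 - 8 * a * b * u * u * (S * S) + c2 * Nm * W * r.
Proof.
  pose proof (tanh_den_pos a b Hb) as HW.
  assert (Hr : 0 < r) by (unfold r; nra).
  unfold F; rewrite m_beta_sqr_mkC by (lra || apply Rgt_not_eq, HW); simpl.
  fold W r; fold W in HW.
  unfold m_sqr_re_num, m_sqr_im_num; fold u S r.
  unfold Dm, Nm; field; split; lra.
Qed.

Lemma middle_coefficients_le : Rabs Dm + Rabs Nm <= A * (U * U) + U + A * U + U * U.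
Proof.
  destruct (sin_cos_double_bounds b Hb) as [[HS1 HS2] _]; fold S in HS1, HS2.
  pose proof (sin_double_ge0 b Hb) as HS0; fold S in HS0.
  assert (Hu : 1 <= u) by (pose proof (exp_ineq1_le (2 * a)); unfold u; lra).
  assert (HuU : u <= U).
  { unfold u, U; destruct (Req_dec a A) as [-> | ]; [lra|].
    left; apply exp_increasing; lra. }
  assert (Huu : 1 <= u * u <= U * U) by (split; [nra | apply Rmult_le_compat; lra]).
  assert (Hbs : 2 * b * S <= 1) by nra.
  assert (Hpos : 0 <= a * (u * u - 1) <= A * (U * U)) by (split; nra).
  assert (0 <= 2 * b * u * S <= U) by (split; [repeat apply Rmult_le_pos|]; nra).
  assert (Hau : a * u <= A * U) by (apply Rmult_le_compat; lra).
  assert (0 <= 2 * a * u * S <= A * U).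
  { split; [repeat apply Rmult_le_pos; lra|].
    assert (a * u * (2 * S) <= A * U * 1) by (apply Rmult_le_compat; nra); lra. }
  assert (0 <= b * (u * u - 1) <= U * U) by (split; nra).
  assert (Rabs Dm <= A * (U * U) + U) by (unfold Dm, Rabs; destruct Rcase_abs; lra).
  assert (Rabs Nm <= A * U + U * U) by (unfold Nm; rewrite Rabs_right; lra).
  lra.
Qed.

Lemma middle_range_ge :
  b * (a0 * (2 * a0) ^ 6 / 180)
    <= (exp (2 * A) + 1) * (exp (2 * A) + 1) * (A * A + 1)
       * (A * (exp (2 * A) * exp (2 * A)) + exp (2 * A) + A * exp (2 * A) + exp (2 * A) * exp (2 * A))
       * Cnorm (Csub F (RtoC c2)).
Proof.
  fold U; pose proof (tanh_den_pos a b Hb) as HW; fold W in HW.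
  destruct (sin_cos_double_bounds b Hb) as [HS HC].
  assert (Hu : 1 <= u) by (pose proof (exp_ineq1_le (2 * a)); unfold u; lra).
  assert (HuU : u <= U).
  { unfold u, U; destruct (Req_dec a A) as [-> | ]; [lra|].
    left; apply exp_increasing; lra. }
  pose proof (exp_double_sextic_le a ltac:(lra)) as Hpsi; fold u in Hpsi.
  replace (u ^ 2) with (u * u) in Hpsi by ring.
  pose proof (middle_combination_ge a b u S (cos (2 * b)) c2 A U a0 Ha0 Ha Hb
                ltac:(lra) Hpsi HS HC ltac:(lra) Hsmall) as Hkey.
  replace (u * u + 2 * u * cos (2 * b) + 1) with W in Hkey by reflexivity.
  fold Nm r in Hkey; rewrite <- middle_combination_eq in Hkey.
  set (N := Cnorm (Csub F (RtoC c2))).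
  assert (HRe : Rabs (Re F - c2) <= N) by apply (Rabs_Re_le (Csub F (RtoC c2))).
  assert (HIm : Rabs (Im F) <= N)
    by (pose proof (Rabs_Im_le (Csub F (RtoC c2))) as H; simpl in H; rewrite Rminus_0_r in H; exact H).
  assert (HN0 : 0 <= N) by apply Cnorm_ge0.
  assert (Hlin : Dm * Im F - Nm * (Re F - c2) <= (Rabs Dm + Rabs Nm) * N).
  { pose proof (Rle_abs (Dm * Im F)) as H1; rewrite Rabs_mult in H1.
    pose proof (Rle_abs (- (Nm * (Re F - c2)))) as H2; rewrite Rabs_Ropp, Rabs_mult in H2.
    assert (Rabs Dm * Rabs (Im F) <= Rabs Dm * N) by (apply Rmult_le_compat_l; auto using Rabs_pos).
    assert (Rabs Nm * Rabs (Re F - c2) <= Rabs Nm * N) by (apply Rmult_le_compat_l; auto using Rabs_pos).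
    lra. }
  assert (HWr : W * r <= (U + 1) * (U + 1) * (A * A + 1)).
  { destruct HC; assert (W <= (U + 1) * (U + 1)) by (unfold W, tanh_den; fold u; nra).
    apply Rmult_le_compat; unfold r; nra. }
  pose proof middle_coefficients_le.
  assert (W * r * (Dm * Im F - Nm * (Re F - c2)) <= W * r * ((Rabs Dm + Rabs Nm) * N))
    by (apply Rmult_le_compat_l; [unfold r; nra | exact Hlin]).
  assert (W * r * ((Rabs Dm + Rabs Nm) * N)
          <= (U + 1) * (U + 1) * (A * A + 1) * (A * (U * U) + U + A * U + U * U) * N).
  { rewrite <- Rmult_assoc; apply Rmult_le_compat_r; [lra|].
    apply Rmult_le_compat; try lra; [unfold r; nra|].
    pose proof (Rabs_pos Dm); pose proof (Rabs_pos Nm); lra. }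
  lra.
Qed.

End MiddleRange.

(* For large [a], [Re F] grows like [beta a]. *)
Lemma large_range_ge beta a b c2 :
  0 < beta < 1/3 -> 16 / beta <= a -> 0 < b <= 1/4 -> c2 <= 2 ->
  beta * a / 4 <= Cnorm (Csub (m_beta_sqr beta (mkC a b)) (RtoC c2)).
Proof.
  intros Hbeta Ha Hb Hc2.
  eapply Rle_trans; [|apply (Rabs_Re_le (Csub _ (RtoC c2)))]; cbn [Re Csub RtoC].
  eapply Rle_trans; [|apply Rle_abs].
  pose proof (tanh_den_pos a b Hb) as HW0.
  rewrite m_beta_sqr_mkC by (lra || apply Rgt_not_eq, HW0).
  destruct (sin_cos_double_bounds b Hb) as [[_ HS2] [HC1 HC2]].
  pose proof (sin_double_ge0 b Hb) as HS0.
  set (u := exp (2 * a)) in *; set (S := sin (2 * b)) in *; set (Co := cos (2 * b)) in *.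
  set (r := a * a + b * b); set (W := tanh_den a b) in *.
  assert (Hba : 16 <= beta * a).
  { apply (Rmult_le_compat_l beta) in Ha; [|lra].
    replace (beta * (16 / beta)) with 16 in Ha by (field; lra); lra. }
  assert (Ha0 : 0 < a) by nra.
  assert (Hu : 1 + 2 * a <= u) by apply exp_ineq1_le.
  assert (Hu3 : 3 <= u) by nra.
  assert (Hr : 0 < r) by (unfold r; nra).
  assert (Hbb : b * b <= 1/16) by nra.
  assert (HW : W <= (u + 1) * (u + 1)) by (unfold W, tanh_den; fold u Co; nra).
  assert (Key : (2 + beta * a / 4) * (u + 1) * (u + 1) + beta * u / 4 <= a * beta * (u * u - 1)).
  { assert (beta * a * (u + 1) * (3 * u - 5) >= beta * a * (u + 1) * (u + 1))
      by (apply Rle_ge, Rmult_le_compat_l; [apply Rmult_le_pos|]; lra).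
    assert (beta * a * ((u + 1) * (u + 1)) >= 16 * ((u + 1) * (u + 1)))
      by (apply Rle_ge, Rmult_le_compat_r; nra).
    nra. }
  assert (HN : (2 + beta * a / 4) * W * r <= m_sqr_re_num beta a b).
  { unfold m_sqr_re_num; fold u S r.
    assert (T1 : - (beta * r * u / 4) <= - 2 * b * (beta * r - 1) * u * S).
    { assert (0 <= 2 * b * u * S) by (repeat apply Rmult_le_pos; lra).
      assert (2 * b * beta * r * u * S <= 2 * b * beta * r * u * (2 * b))
        by (apply Rmult_le_compat_l; [repeat apply Rmult_le_pos|]; lra).
      assert (4 * beta * r * u * (b * b) <= 4 * beta * r * u * (1/16))
        by (apply Rmult_le_compat_l; [repeat apply Rmult_le_pos|]; lra).
      nra. }
    assert (T2 : (2 + beta * a / 4) * W * r <= (2 + beta * a / 4) * ((u + 1) * (u + 1)) * r)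
      by (apply Rmult_le_compat_r; [|apply Rmult_le_compat_l]; lra).
    assert (T3 : r * ((2 + beta * a / 4) * (u + 1) * (u + 1) + beta * u / 4) <= r * (a * beta * (u * u - 1)))
      by (apply Rmult_le_compat_l; lra).
    assert (0 <= a * (u * u - 1)) by nra.
    nra. }
  assert (HWr : 0 < W * r) by nra.
  apply (Rmult_le_compat_r (/ (W * r))) in HN; [|left; apply Rinv_0_lt_compat; lra].
  replace ((2 + beta * a / 4) * W * r * / (W * r)) with (2 + beta * a / 4) in HN by (field; lra).
  cbn [Re]; unfold Rdiv; lra.
Qed.

Lemma m_beta_sqr_sub_ge beta a0 : 0 < beta < 1/3 -> 0 < a0 ->
  exists kap b0, 0 < kap /\ 0 < b0 <= 1/4 /\
  forall a b c2, a0 <= a -> 0 < b <= b0 -> 1 <= c2 <= 2 ->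
  kap * b * (1 + a) <= Cnorm (Csub (m_beta_sqr beta (mkC a b)) (RtoC c2)).
Proof.
  intros Hbeta Ha0.
  set (A := 16 / beta); assert (HA : 0 < A) by (apply Rdiv_lt_0_compat; lra).
  set (U := exp (2 * A)); assert (HU : 1 <= U) by (pose proof (exp_ineq1_le (2 * A)); unfold U; lra).
  set (K0 := a0 * (2 * a0) ^ 6 / 180).
  assert (HK0 : 0 < K0) by (pose proof (pow_lt (2 * a0) 6); unfold K0; nra).
  set (B := (U + 1) * (U + 1) * (A * A + 1) * (A * (U * U) + U + A * U + U * U)).
  assert (HB : 0 < B) by (unfold B; repeat apply Rmult_lt_0_compat; nra).
  pose proof (middle_err_ge0 A U ltac:(lra) ltac:(lra)) as HE.
  assert (Hk : 0 < K0 / (B * (1 + A))) by (apply Rdiv_lt_0_compat; nra).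
  assert (Hb0 : 0 < K0 / (middle_err A U + 1)) by (apply Rdiv_lt_0_compat; lra).
  exists (Rmin (beta / 8) (K0 / (B * (1 + A)))), (Rmin (1/4) (K0 / (middle_err A U + 1))).
  split; [apply Rmin_glb_lt; lra|]; split; [split; [apply Rmin_glb_lt; lra | apply Rmin_l]|].
  intros a b c2 Ha Hb Hc2.
  assert (Hb4 : b <= 1/4) by (pose proof (Rmin_l (1/4) (K0 / (middle_err A U + 1))); lra).
  assert (HbK : b <= K0 / (middle_err A U + 1))
    by (pose proof (Rmin_r (1/4) (K0 / (middle_err A U + 1))); lra).
  pose proof (Rmin_l (beta / 8) (K0 / (B * (1 + A)))).
  pose proof (Rmin_r (beta / 8) (K0 / (B * (1 + A)))).
  set (kap := Rmin (beta / 8) (K0 / (B * (1 + A)))) in *.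
  assert (Hkap : 0 < kap) by (apply Rmin_glb_lt; lra).
  destruct (Rle_dec A a) as [HaA | HaA].
  - pose proof (large_range_ge beta a b c2 Hbeta HaA ltac:(lra) ltac:(lra)).
    assert (1 <= a) by (unfold A in HaA; apply Rle_trans with (16 / beta); [|lra];
      apply (Rmult_le_reg_l beta); [lra|]; field_simplify; lra).
    assert (kap * b * (1 + a) <= beta / 8 * (2 * a)).
    { assert (b * (1 + a) <= 2 * a) by nra.
      rewrite Rmult_assoc; apply Rmult_le_compat; try lra; nra. }
    lra.
  - assert (Hsmall : b * b * middle_err A U <= K0).
    { assert (b * (middle_err A U + 1) <= K0).
      { apply (Rmult_le_compat_r (middle_err A U + 1)) in HbK; [|lra].
        unfold Rdiv in HbK; rewrite Rmult_assoc, Rinv_l, Rmult_1_r in HbK by lra; lra. }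
      assert (b * b * middle_err A U <= b * middle_err A U) by (apply Rmult_le_compat_r; nra).
      nra. }
    pose proof (middle_range_ge beta a b c2 A a0 Ha0 ltac:(lra) ltac:(lra) Hc2 Hsmall) as Hmid.
    fold U B K0 in Hmid.
    assert (kap * b * (1 + a) <= K0 / (B * (1 + A)) * b * (1 + A))
      by (apply Rmult_le_compat; try lra; [nra | apply Rmult_le_compat_r; lra]).
    replace (K0 / (B * (1 + A)) * b * (1 + A)) with (b * K0 / B) in * by (field; lra).
    assert (b * K0 / B <= Cnorm (Csub (m_beta_sqr beta (mkC a b)) (RtoC c2))).
    { apply (Rmult_le_reg_l B); [lra|].
      replace (B * (b * K0 / B)) with (b * K0) by (field; lra); lra. }
    lra.
Qed.

(** * Square roots and the two wavenumber regimes *)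

Lemma Csqrt_sub_mul_add (F : C) c :
  Cmul (Csub (Csqrt F) (RtoC c)) (Cadd (Csqrt F) (RtoC c)) = Csub F (RtoC (c * c)).
Proof.
  pose proof (Csqrt_sqr F) as HF; set (m := Csqrt F) in *.
  rewrite <- HF; apply C_ext; simpl; ring.
Qed.

Lemma Cnorm_Csqrt_add_ge (F : C) c : 1 <= c -> 1 <= Cnorm (Cadd (Csqrt F) (RtoC c)).
Proof.
  intros Hc; pose proof (Re_Csqrt_ge0 F); pose proof (Rabs_Re_le (Cadd (Csqrt F) (RtoC c))).
  cbn [Re Cadd RtoC] in *; pose proof (Rle_abs (Re (Csqrt F) + c)); lra.
Qed.

Lemma Cnorm_Csqrt_add_le (F : C) c : 0 <= c -> Cnorm (Cadd (Csqrt F) (RtoC c)) <= sqrt (Cnorm F) + c.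
Proof.
  intros Hc; eapply Rle_trans; [apply Cnorm_triangle|].
  rewrite Cnorm_Csqrt, Cnorm_RtoC, Rabs_right by lra; lra.
Qed.

Lemma Cnorm_Csqrt_sub_ge (F : C) c X : 1 <= c -> Cnorm (Cadd (Csqrt F) (RtoC c)) <= X ->
  Cnorm (Csub F (RtoC (c * c))) / X <= Cnorm (Csub (Csqrt F) (RtoC c)).
Proof.
  intros Hc HX; pose proof (Cnorm_Csqrt_add_ge F c Hc).
  rewrite <- Csqrt_sub_mul_add, Cnorm_mul.
  pose proof (Cnorm_ge0 (Csub (Csqrt F) (RtoC c))).
  apply (Rmult_le_reg_r X); [lra|].
  unfold Rdiv; rewrite Rmult_assoc, Rinv_l, Rmult_1_r by lra.
  apply Rmult_le_compat_l; lra.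
Qed.

Lemma Cnorm_Csqrt_sub1_le (F : C) : Cnorm (Csub (Csqrt F) (RtoC 1)) <= Cnorm (Csub F (RtoC 1)).
Proof.
  pose proof (Csqrt_sub_mul_add F 1) as HF; rewrite Rmult_1_r in HF.
  pose proof (Cnorm_Csqrt_add_ge F 1 ltac:(lra)).
  pose proof (Cnorm_ge0 (Csub (Csqrt F) (RtoC 1))).
  rewrite <- HF, Cnorm_mul.
  rewrite <- (Rmult_1_r (Cnorm (Csub (Csqrt F) (RtoC 1)))) at 1.
  apply Rmult_le_compat_l; lra.
Qed.

(* From [(sqrt F - 1 + z)(sqrt F + 1) = (F - 1 + 2 z) + z (sqrt F - 1)] and
   [|sqrt F + 1| >= 1]. *)
Lemma Cnorm_Csqrt_sub1_add_le (F z : C) :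
  Cnorm (Cadd (Csub (Csqrt F) (RtoC 1)) z)
    <= Cnorm (Cadd (Csub F (RtoC 1)) (Cmul (RtoC 2) z)) + Cnorm z * Cnorm (Csub (Csqrt F) (RtoC 1)).
Proof.
  set (E := Cadd (Csub (Csqrt F) (RtoC 1)) z).
  assert (HE : Cmul E (Cadd (Csqrt F) (RtoC 1))
               = Cadd (Cadd (Csub F (RtoC 1)) (Cmul (RtoC 2) z)) (Cmul z (Csub (Csqrt F) (RtoC 1)))).
  { pose proof (Csqrt_sqr F) as HF; unfold E; set (m := Csqrt F) in *.
    rewrite <- HF; apply C_ext; simpl; ring. }
  pose proof (Cnorm_Csqrt_add_ge F 1 ltac:(lra)); pose proof (Cnorm_ge0 E).
  apply Rle_trans with (Cnorm E * Cnorm (Cadd (Csqrt F) (RtoC 1))).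
  - rewrite <- (Rmult_1_r (Cnorm E)) at 1; apply Rmult_le_compat_l; lra.
  - rewrite <- Cnorm_mul, HE, <- Cnorm_mul; apply Cnorm_triangle.
Qed.

Lemma gamma_beta_bounds beta : 0 < beta < 1/3 -> 0 < gamma_beta beta < 1/6.
Proof. unfold gamma_beta; lra. Qed.

Lemma Cnorm_one_add_sqr_ge K q : 0 < q <= 1/2 ->
  (1 + (K * K + q * q)) / 2 <= Cnorm (Cadd (RtoC 1) (Cmul (mkC K q) (mkC K q))).
Proof.
  intros Hq; apply Rle_of_sqr_le; [apply Cnorm_ge0|].
  rewrite Cnorm_sqr; unfold Cnorm2; simpl.
  assert (0 <= K * q * (K * q)) by nra.
  nra.
Qed.

Section SmallWavenumber.

Variables beta eps K q : R.
Hypothesis Hbeta : 0 < beta < 1/3.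
Hypothesis Hq : 0 < q <= 1/2.
Hypothesis Heps : 0 < eps <= 1.
Hypothesis Hsmall : Cnorm (mkC (eps * K) (eps * q)) <= gamma_beta beta / 28.

Let g := gamma_beta beta.
Let k := mkC (eps * K) (eps * q).
Let F := m_beta_sqr beta k.
Let rho := Cnorm k.

Lemma small_taylor_bounds :
  Cnorm (Cadd (Csub F (RtoC 1)) (Cmul (RtoC (2 * g)) (Cmul k k))) <= 7 * (rho * rho * rho)
  /\ 7 * (rho * rho * rho) <= g / 4 * (rho * rho)
  /\ Cnorm (Csub F (RtoC 1)) <= rho.
Proof.
  pose proof (gamma_beta_bounds beta Hbeta) as Hg; fold g in Hg.
  assert (Hr0 : 0 <= rho) by apply Cnorm_ge0.
  assert (Hrd : rho <= g / 28) by exact Hsmall.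
  assert (Hk0 : k <> RtoC 0) by (intros Hk; assert (Im k = 0) by (rewrite Hk; reflexivity); simpl in *; nra).
  pose proof (m_beta_sqr_taylor_le beta k Hbeta Hk0 ltac:(fold rho; lra)) as HT; fold F g rho in HT.
  assert (Hr3 : 7 * (rho * rho * rho) <= g / 4 * (rho * rho)) by nra.
  split; [exact HT|split; [exact Hr3|]].
  replace (Csub F (RtoC 1))
    with (Csub (Cadd (Csub F (RtoC 1)) (Cmul (RtoC (2 * g)) (Cmul k k))) (Cmul (RtoC (2 * g)) (Cmul k k)))
    by ring.
  eapply Rle_trans; [apply Cnorm_sub_le|].
  rewrite Cnorm_scale, Cnorm_mul, Rabs_right by lra; fold rho.
  assert (rho * rho <= rho / 100) by nra; assert (rho * rho * rho <= rho * rho / 100) by nra.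
  nra.
Qed.

Lemma small_lower_bound :
  g / 8 * (eps * eps) * (1 + (K * K + q * q))
    <= Cnorm (Csub (Csqrt F) (RtoC (1 + g * (eps * eps)))).
Proof.
  pose proof (gamma_beta_bounds beta Hbeta) as Hg; fold g in Hg.
  destruct small_taylor_bounds as [HT [Hr3 HF1]].
  set (err := Cadd (Csub F (RtoC 1)) (Cmul (RtoC (2 * g)) (Cmul k k))) in *.
  set (c := 1 + g * (eps * eps)); set (R := K * K + q * q).
  set (w := Cadd (RtoC 1) (Cmul (mkC K q) (mkC K q))).
  pose proof (Cnorm_one_add_sqr_ge K q Hq) as Hw; fold w R in Hw.
  assert (HR : 0 <= R) by (unfold R; nra).
  assert (HrR : rho * rho = eps * eps * R) by (unfold rho, k, R; rewrite Cnorm_mkC_sqr; ring).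
  assert (Hge : 0 <= g * (eps * eps) <= 1/6) by (split; nra).
  assert (HFc : g / 2 * (eps * eps) * (1 + R) <= Cnorm (Csub F (RtoC (c * c)))).
  { replace (Csub F (RtoC (c * c)))
      with (Csub (Csub err (Cmul (RtoC (2 * g * (eps * eps))) w)) (RtoC (g * g * (eps * eps * (eps * eps)))))
      by (unfold err, w, c, k; apply C_ext; simpl; ring).
    eapply Rle_trans; [|apply Cnorm_sub_ge].
    rewrite Cnorm_sub_sym, Cnorm_RtoC, Rabs_right by nra.
    pose proof (Cnorm_sub_ge (Cmul (RtoC (2 * g * (eps * eps))) w) err).
    rewrite Cnorm_scale, Rabs_right in * by nra.
    assert (2 * g * (eps * eps) * ((1 + R) / 2) <= 2 * g * (eps * eps) * Cnorm w)
      by (apply Rmult_le_compat_l; nra).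
    assert (g * g * (eps * eps * (eps * eps)) <= g / 6 * (eps * eps)) by nra.
    assert (0 <= g * (eps * eps * R)) by (apply Rmult_le_pos; nra).
    nra. }
  assert (HFn : Cnorm F <= 2).
  { pose proof (Cnorm_triangle (Csub F (RtoC 1)) (RtoC 1)) as H.
    replace (Cadd (Csub F (RtoC 1)) (RtoC 1)) with F in H by ring.
    assert (rho <= g / 28) by exact Hsmall.
    rewrite Cnorm_RtoC, Rabs_R1 in H; lra. }
  assert (Hmc : Cnorm (Cadd (Csqrt F) (RtoC c)) <= 4).
  { eapply Rle_trans; [apply Cnorm_Csqrt_add_le; unfold c; lra|].
    assert (sqrt (Cnorm F) <= 2)
      by (apply Rle_of_sqr_le; [lra|]; rewrite sqrt_sqrt by apply Cnorm_ge0; lra).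
    unfold c; lra. }
  pose proof (Cnorm_Csqrt_sub_ge F c 4 ltac:(unfold c; lra) Hmc).
  lra.
Qed.

Lemma small_upper_bound :
  Cnorm (Cadd (Csub (Csqrt F) (RtoC 1)) (Cmul (RtoC g) (Cmul k k))) <= 8 * (rho * rho * rho).
Proof.
  pose proof (gamma_beta_bounds beta Hbeta) as Hg; fold g in Hg.
  destruct small_taylor_bounds as [HT [Hr3 HF1]].
  assert (Hr0 : 0 <= rho) by apply Cnorm_ge0.
  pose proof (Cnorm_Csqrt_sub1_le F); pose proof (Cnorm_ge0 (Csub (Csqrt F) (RtoC 1))).
  eapply Rle_trans; [apply Cnorm_Csqrt_sub1_add_le|].
  replace (Cmul (RtoC 2) (Cmul (RtoC g) (Cmul k k))) with (Cmul (RtoC (2 * g)) (Cmul k k))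
    by (apply C_ext; simpl; ring).
  rewrite Cnorm_scale, Cnorm_mul, Rabs_right by lra; fold rho.
  assert (g * (rho * rho) * Cnorm (Csub (Csqrt F) (RtoC 1)) <= g * (rho * rho) * rho)
    by (apply Rmult_le_compat_l; nra).
  assert (g * (rho * rho * rho) <= rho * rho * rho)
    by (assert (0 <= rho * rho * rho) by (repeat apply Rmult_le_pos; lra); nra).
  lra.
Qed.

End SmallWavenumber.

Section LargeWavenumber.

Variables beta kap b0 eps K q : R.
Hypothesis Hbeta : 0 < beta < 1/3.
Hypothesis Hb0 : 0 < b0 <= 1/4.
Hypothesis HLR : forall a b c2, gamma_beta beta / 28 / 2 <= a -> 0 < b <= b0 -> 1 <= c2 <= 2 ->
  kap * b * (1 + a) <= Cnorm (Csub (m_beta_sqr beta (mkC a b)) (RtoC c2)).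
Hypothesis Hq : 0 < q <= 1/2.
Hypothesis Heps : 0 < eps <= 1.
Hypothesis Heb : eps * q <= b0.
Hypothesis Hed : eps * q <= gamma_beta beta / 28 / 2.
Hypothesis Hlarge : gamma_beta beta / 28 <= Cnorm (mkC (eps * K) (eps * q)).

Let g := gamma_beta beta.
Let d := g / 28.
Let k := mkC (eps * K) (eps * q).
Let F := m_beta_sqr beta k.
Let c := 1 + g * (eps * eps).
Let M := 2 * (/ (d * d) + beta).
Let s := sqrt (1 + Rabs (eps * K)).

Lemma Rabs_re_large : d / 2 <= Rabs (eps * K).
Proof.
  pose proof (gamma_beta_bounds beta Hbeta) as Hg; fold g in Hg.
  assert (Hrr : Cnorm k * Cnorm k = eps * K * (eps * K) + eps * q * (eps * q)) by apply Cnorm_mkC_sqr.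
  assert (d <= Cnorm k) by exact Hlarge.
  assert (eps * q <= d / 2) by exact Hed.
  assert (Hd : 0 < d) by (unfold d; lra).
  assert (0 < eps * q) by nra.
  assert (d * d <= Cnorm k * Cnorm k) by nra.
  assert (eps * q * (eps * q) <= d / 2 * (d / 2)) by nra.
  assert (d / 2 * (d / 2) <= eps * K * (eps * K)) by nra.
  rewrite <- (Rabs_right (d / 2)) by lra.
  apply Rsqr_le_abs_0; unfold Rsqr; lra.
Qed.

(* By [Cnorm_m_beta_sqr_sub_reflect], [|F - c'|] depends on [eps K] only through
   [|eps K|], so both bounds reduce to the case [eps K >= 0]. *)
Lemma large_m_beta_sqr_bounds :
  kap * (eps * q) * (1 + Rabs (eps * K)) <= Cnorm (Csub F (RtoC (c * c)))
  /\ Cnorm F <= M * (1 + Rabs (eps * K)).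
Proof.
  pose proof (gamma_beta_bounds beta Hbeta) as Hg; fold g in Hg.
  pose proof Rabs_re_large as Ha.
  assert (Hb : 0 < eps * q <= 1/4) by (split; [nra | lra]).
  assert (Hge : 0 <= g * (eps * eps) <= 1/6) by (split; nra).
  assert (Hc : 1 <= c * c <= 2) by (unfold c; split; nra).
  assert (Hreflect : forall c', Cnorm (Csub F (RtoC c'))
             = Cnorm (Csub (m_beta_sqr beta (mkC (Rabs (eps * K)) (eps * q))) (RtoC c'))).
  { intros c'; unfold F, k; destruct (Rle_lt_dec 0 (eps * K)).
    - rewrite Rabs_right by lra; reflexivity.
    - rewrite Rabs_left, <- Cnorm_m_beta_sqr_sub_reflect by lra.
      reflexivity. }
  split.
  - rewrite Hreflect; apply HLR; [exact Ha | lra | lra].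
  - replace F with (Csub F (RtoC 0)) by ring; rewrite Hreflect.
    replace (Csub (m_beta_sqr beta (mkC (Rabs (eps * K)) (eps * q))) (RtoC 0))
      with (m_beta_sqr beta (mkC (Rabs (eps * K)) (eps * q))) by ring.
    eapply Rle_trans; [apply Cnorm_m_beta_sqr_le; [lra | apply Rabs_pos | exact Hb]|].
    apply Rmult_le_compat_r; [pose proof (Rabs_pos (eps * K)); lra|].
    apply Rmult_le_compat_l; [lra|]; apply Rplus_le_compat_r.
    assert (Hrho : Rabs (eps * K) * Rabs (eps * K) + eps * q * (eps * q) = Cnorm k * Cnorm k)
      by (unfold k; rewrite Cnorm_mkC_sqr, <- Rabs_mult, Rabs_right by nra; reflexivity).
    assert (d <= Cnorm k) by exact Hlarge.
    rewrite Hrho; apply Rinv_le_contravar; unfold d in *; nra.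
Qed.

Lemma large_lower_bound : kap / (sqrt M + 2) * (eps * q) * s <= Cnorm (Csub (Csqrt F) (RtoC c)).
Proof.
  pose proof (gamma_beta_bounds beta Hbeta) as Hg; fold g in Hg.
  destruct large_m_beta_sqr_bounds as [HFc HFu].
  pose proof (Rabs_pos (eps * K)) as Ha0.
  assert (Hss : s * s = 1 + Rabs (eps * K)) by (apply sqrt_sqrt; lra).
  assert (Hs1 : 1 <= s) by (apply Rle_of_sqr_le; [apply sqrt_pos | lra]).
  assert (HM : 0 <= M) by (assert (0 < / (d * d)) by (apply Rinv_0_lt_compat; unfold d; nra); unfold M; lra).
  assert (HsF : sqrt (Cnorm F) <= sqrt M * s)
    by (unfold s; rewrite <- sqrt_mult by lra; apply sqrt_le_1_alt, HFu).
  pose proof (sqrt_pos M).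
  assert (Hmc : Cnorm (Cadd (Csqrt F) (RtoC c)) <= (sqrt M + 2) * s).
  { eapply Rle_trans; [apply Cnorm_Csqrt_add_le; unfold c; nra|]. unfold c; nra. }
  eapply Rle_trans; [|apply (Cnorm_Csqrt_sub_ge F c _ ltac:(unfold c; nra) Hmc)].
  apply (Rmult_le_reg_r ((sqrt M + 2) * s)); [nra|].
  replace (Cnorm (Csub F (RtoC (c * c))) / ((sqrt M + 2) * s) * ((sqrt M + 2) * s))
    with (Cnorm (Csub F (RtoC (c * c)))) by (field; nra).
  replace (kap / (sqrt M + 2) * (eps * q) * s * ((sqrt M + 2) * s)) with (kap * (eps * q) * (s * s))
    by (field; lra).
  rewrite Hss; lra.
Qed.

Lemma large_upper_bound :
  Cnorm (Cadd (Csub (Csqrt F) (RtoC 1)) (Cmul (RtoC g) (Cmul k k)))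
    <= (sqrt M + 1) * s + g * (Cnorm k * Cnorm k).
Proof.
  pose proof (gamma_beta_bounds beta Hbeta) as Hg; fold g in Hg.
  destruct large_m_beta_sqr_bounds as [_ HFu].
  pose proof (Rabs_pos (eps * K)) as Ha0.
  assert (Hss : s * s = 1 + Rabs (eps * K)) by (apply sqrt_sqrt; lra).
  assert (Hs1 : 1 <= s) by (apply Rle_of_sqr_le; [apply sqrt_pos | lra]).
  assert (HM : 0 <= M) by (assert (0 < / (d * d)) by (apply Rinv_0_lt_compat; unfold d; nra); unfold M; lra).
  assert (HsF : sqrt (Cnorm F) <= sqrt M * s)
    by (unfold s; rewrite <- sqrt_mult by lra; apply sqrt_le_1_alt, HFu).
  pose proof (sqrt_pos M).
  eapply Rle_trans; [apply Cnorm_triangle|].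
  rewrite Cnorm_scale, Rabs_right, Cnorm_mul by lra.
  pose proof (Cnorm_sub_le (Csqrt F) (RtoC 1)) as H1.
  rewrite Cnorm_Csqrt, Cnorm_RtoC, Rabs_R1 in H1.
  nra.
Qed.

Lemma large_upper_bound_rescaled :
  Cnorm (Cadd (Csub (Csqrt F) (RtoC 1)) (Cmul (RtoC g) (Cmul k k)))
    <= ((sqrt M + 1) / (d * d) + g) * s * (eps * eps * (1 + (K * K + q * q))).
Proof.
  pose proof (gamma_beta_bounds beta Hbeta) as Hg; fold g in Hg.
  assert (Hd : 0 < d) by (unfold d; lra).
  pose proof large_upper_bound as HE; pose proof (sqrt_pos M).
  pose proof (Rabs_pos (eps * K)).
  assert (Hss : s * s = 1 + Rabs (eps * K)) by (apply sqrt_sqrt; lra).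
  assert (Hs1 : 1 <= s) by (apply Rle_of_sqr_le; [apply sqrt_pos | lra]).
  set (R := K * K + q * q); assert (HR : 0 <= R) by (unfold R; nra).
  assert (Hrho : Cnorm k * Cnorm k = eps * eps * R) by (unfold k, R; rewrite Cnorm_mkC_sqr; ring).
  assert (Hd2 : d * d <= eps * eps * (1 + R)) by (assert (d <= Cnorm k) by exact Hlarge; nra).
  assert ((sqrt M + 1) * s <= (sqrt M + 1) / (d * d) * s * (eps * eps * (1 + R))).
  { replace ((sqrt M + 1) * s) with ((sqrt M + 1) / (d * d) * s * (d * d)) at 1 by (field; lra).
    apply Rmult_le_compat_l; [|lra].
    apply Rmult_le_pos; [apply Rlt_le, Rdiv_lt_0_compat|]; nra. }
  assert (g * (Cnorm k * Cnorm k) <= g * s * (eps * eps * (1 + R))).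
  { rewrite Hrho; replace (g * s * (eps * eps * (1 + R))) with (g * (s * (eps * eps * (1 + R)))) by ring.
    apply Rmult_le_compat_l; [lra|].
    assert (eps * eps * R <= 1 * (eps * eps * (1 + R))) by nra.
    assert (1 * (eps * eps * (1 + R)) <= s * (eps * eps * (1 + R))) by (apply Rmult_le_compat_r; nra).
    lra. }
  nra.
Qed.

End LargeWavenumber.

(** * Estimates on [l_eps] *)

Lemma Cinv_add_scale_Cinv (l w : C) g : l <> RtoC 0 -> w <> RtoC 0 -> g <> 0 ->
  Cadd (Cinv l) (Cmul (RtoC (/ g)) (Cinv w))
  = Cmul (Cmul (Cmul (Cadd l (Cmul (RtoC g) w)) (Cinv l)) (Cinv w)) (RtoC (/ g)).
Proof.
  intros Hl Hw Hg; pose proof (Cmul_Cinv_r l Hl); pose proof (Cmul_Cinv_r w Hw).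
  assert (Hgg : Cmul (RtoC g) (RtoC (/ g)) = RtoC 1) by (apply C_ext; simpl; field; auto).
  transitivity (Cadd (Cmul (Cmul (Cmul l (Cinv l)) (Cinv w)) (RtoC (/ g)))
                     (Cmul (Cmul (RtoC g) (RtoC (/ g))) (Cmul (Cmul w (Cinv w)) (Cinv l)))).
  - rewrite H, H0, Hgg; ring.
  - ring.
Qed.

Lemma Cinv_estimates (l w : C) (g eps lam s Cq : R) :
  0 < g -> 0 < eps -> 0 < lam -> lam <= Cnorm l -> w <> RtoC 0 -> 0 <= Cq ->
  s <= Cq * lam -> Cnorm (Cadd l (Cmul (RtoC g) w)) <= Cq * eps * (g * lam * Cnorm w) ->
  l <> RtoC 0 /\ s * Cnorm (Cinv l) <= Cq
  /\ Cnorm (Cadd (Cinv l) (Cmul (RtoC (/ g)) (Cinv w))) <= Cq * eps.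
Proof.
  intros Hg Heps Hlam Hl Hw HCq Hs HE.
  assert (Hl0 : l <> RtoC 0) by (apply Cnorm_neq0; lra).
  pose proof (Cnorm_pos w Hw) as Hw0.
  split; [exact Hl0|split].
  - rewrite Cnorm_Cinv by auto.
    apply (Rmult_le_reg_r (Cnorm l)); [lra|].
    rewrite Rmult_assoc, Rinv_l, Rmult_1_r by lra.
    assert (Cq * lam <= Cq * Cnorm l) by (apply Rmult_le_compat_l; lra).
    lra.
  - rewrite Cinv_add_scale_Cinv by (auto; lra).
    rewrite !Cnorm_mul, !Cnorm_Cinv, !Cnorm_RtoC, Rabs_right by (auto; left; apply Rinv_0_lt_compat; lra).
    pose proof (Cnorm_ge0 (Cadd l (Cmul (RtoC g) w))).
    apply (Rmult_le_reg_r (Cnorm l * Cnorm w * g)); [repeat apply Rmult_lt_0_compat; lra|].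
    replace (Cnorm (Cadd l (Cmul (RtoC g) w)) * / Cnorm l * / Cnorm w * / g * (Cnorm l * Cnorm w * g))
      with (Cnorm (Cadd l (Cmul (RtoC g) w))) by (field; repeat split; lra).
    assert (g * lam * Cnorm w <= Cnorm l * Cnorm w * g).
    { replace (Cnorm l * Cnorm w * g) with (g * Cnorm l * Cnorm w) by ring.
      apply Rmult_le_compat_r; [lra|]; apply Rmult_le_compat_l; lra. }
    assert (Cq * eps * (g * lam * Cnorm w) <= Cq * eps * (Cnorm l * Cnorm w * g))
      by (apply Rmult_le_compat_l; nra).
    lra.
Qed.

Lemma sqrt_sqrt_le_self x : 1 <= x -> sqrt (sqrt x) <= x.
Proof.
  intros Hx.
  assert (Hle : forall y, 1 <= y -> 1 <= sqrt y <= y).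
  { intros y Hy; assert (1 <= sqrt y) by (rewrite <- sqrt_1; apply sqrt_le_1_alt; lra).
    split; [lra|]; pose proof (sqrt_sqrt y ltac:(lra)); nra. }
  destruct (Hle x Hx); destruct (Hle (sqrt x)); lra.
Qed.

Lemma sqrt_sqrt_mul_le K eps : 0 < eps <= 1 ->
  sqrt (sqrt (1 + K * K)) * eps <= sqrt (1 + Rabs (eps * K)).
Proof.
  intros He; set (t := sqrt (sqrt (1 + K * K))).
  assert (Ht : t * t = sqrt (1 + K * K)) by (apply sqrt_sqrt, sqrt_pos).
  pose proof (Rabs_pos K); pose proof (sqrt_pos (1 + K * K)).
  assert (Hs : sqrt (1 + K * K) <= 1 + Rabs K).
  { apply Rle_of_sqr_le; [lra|]; rewrite sqrt_sqrt by nra.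
    rewrite <- (Rabs_right (K * K)), Rabs_mult by nra; nra. }
  apply Rle_of_sqr_le; [apply sqrt_pos|].
  rewrite sqrt_sqrt, Rabs_mult, (Rabs_right eps) by (try pose proof (Rabs_pos (eps * K)); lra).
  replace (t * eps * (t * eps)) with (t * t * (eps * eps)) by ring; rewrite Ht.
  assert (sqrt (1 + K * K) * (eps * eps) <= (1 + Rabs K) * (eps * eps)) by (apply Rmult_le_compat_r; nra).
  assert (eps * eps <= eps) by nra.
  assert ((1 + Rabs K) * (eps * eps) <= (1 + Rabs K) * eps) by (apply Rmult_le_compat_l; lra).
  lra.
Qed.

Definition l_eps_bounds (beta eps q K Cq : R) : Prop :=
  let Z := mkC K q in
  l_eps beta eps Z <> RtoC 0 /\
  sqrt (sqrt (1 + K * K)) * Cnorm (Cinv (l_eps beta eps Z)) <= Cq /\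
  Cnorm (Cadd (Cinv (l_eps beta eps Z))
              (Cmul (RtoC (/ gamma_beta beta)) (Cinv (Cadd (RtoC 1) (Cmul Z Z))))) <= Cq * eps.

Section LEps.

Variables beta eps K q : R.
Hypothesis Heps : 0 < eps.

Let g := gamma_beta beta.
Let Z := mkC K q.
Let k := mkC (eps * K) (eps * q).
Let F := m_beta_sqr beta k.

Lemma Cnorm_l_eps :
  Cnorm (l_eps beta eps Z) = Cnorm (Csub (Csqrt F) (RtoC (1 + g * (eps * eps)))) / (eps * eps).
Proof.
  unfold l_eps; rewrite Cnorm_scale, Rabs_right by (left; apply Rinv_0_lt_compat; nra).
  replace (Cmul (RtoC eps) Z) with k by (apply C_ext; simpl; ring).
  unfold Rdiv; rewrite Rmult_comm; reflexivity.
Qed.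

Lemma Cnorm_l_eps_add :
  Cnorm (Cadd (l_eps beta eps Z) (Cmul (RtoC g) (Cadd (RtoC 1) (Cmul Z Z))))
  = Cnorm (Cadd (Csub (Csqrt F) (RtoC 1)) (Cmul (RtoC g) (Cmul k k))) / (eps * eps).
Proof.
  unfold l_eps; replace (Cmul (RtoC eps) Z) with k by (apply C_ext; simpl; ring).
  replace (Cadd (Cmul (RtoC (/ (eps * eps))) (Csub (m_beta beta k) (RtoC (1 + gamma_beta beta * (eps * eps)))))
                (Cmul (RtoC g) (Cadd (RtoC 1) (Cmul Z Z))))
    with (Cmul (RtoC (/ (eps * eps))) (Cadd (Csub (Csqrt F) (RtoC 1)) (Cmul (RtoC g) (Cmul k k))))
    by (unfold F, k, Z, g; rewrite m_beta_Csqrt; apply C_ext; simpl; field; lra).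
  rewrite Cnorm_scale, Rabs_right by (left; apply Rinv_0_lt_compat; nra).
  unfold Rdiv; rewrite Rmult_comm; reflexivity.
Qed.

End LEps.

Lemma l_eps_bounds_small beta eps q K Cq :
  0 < beta < 1/3 -> 0 < q <= 1/2 -> 0 < eps <= 1 ->
  Cnorm (mkC (eps * K) (eps * q)) <= gamma_beta beta / 28 ->
  8 / gamma_beta beta + 128 / (gamma_beta beta * gamma_beta beta) <= Cq ->
  l_eps_bounds beta eps q K Cq.
Proof.
  intros Hbeta Hq Heps Hsmall HCq.
  pose proof (gamma_beta_bounds beta Hbeta) as Hg; set (g := gamma_beta beta) in *.
  set (R := K * K + q * q); assert (HR : 0 <= R) by (unfold R; nra).
  set (rho := Cnorm (mkC (eps * K) (eps * q))).
  assert (Hrho : rho * rho = eps * eps * R) by (unfold rho, R; rewrite Cnorm_mkC_sqr; ring).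
  assert (Hr1 : rho <= eps * (1 + R)).
  { apply Rle_of_sqr_le; [nra|]; rewrite Hrho.
    replace (eps * (1 + R) * (eps * (1 + R))) with (eps * eps * ((1 + R) * (1 + R))) by ring.
    apply Rmult_le_compat_l; nra. }
  assert (Hr3 : rho * rho * rho <= eps * eps * eps * ((1 + R) * (1 + R))).
  { replace (eps * eps * eps * ((1 + R) * (1 + R))) with ((eps * eps * (1 + R)) * (eps * (1 + R))) by ring.
    apply Rmult_le_compat; try nra; apply Cnorm_ge0. }
  pose proof (Cnorm_one_add_sqr_ge K q Hq) as Hw; fold R in Hw.
  set (w := Cadd (RtoC 1) (Cmul (mkC K q) (mkC K q))) in *.
  assert (H8g : 0 < 8 / g) by (apply Rdiv_lt_0_compat; lra).
  assert (H128 : 0 < 128 / (g * g)) by (apply Rdiv_lt_0_compat; nra).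
  apply (Cinv_estimates _ w g eps (g / 8 * (1 + R))); try lra.
  - apply Rmult_lt_0_compat; lra.
  - rewrite Cnorm_l_eps by lra; fold g.
    apply (Rle_div_r _ _ (eps * eps)); [nra|].
    pose proof (small_lower_bound beta eps K q Hbeta Hq Heps Hsmall) as HD; fold g R in HD; lra.
  - apply Cnorm_neq0; lra.
  - pose proof (sqrt_sqrt_le_self (1 + K * K) ltac:(nra)).
    assert (8 / g * (g / 8 * (1 + R)) = 1 + R) by (field; lra).
    assert (0 <= 128 / (g * g) * (g / 8 * (1 + R))) by (apply Rmult_le_pos; nra).
    assert (1 + K * K <= 1 + R) by (unfold R; nra).
    nra.
  - rewrite Cnorm_l_eps_add by lra; fold g.
    pose proof (small_upper_bound beta eps K q Hbeta Hq Heps Hsmall) as HE; fold g rho in HE.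
    apply (Rle_div_l _ _ (eps * eps)); [nra|].
    assert (128 / (g * g) * eps * (g * (g / 8 * (1 + R)) * ((1 + R) / 2)) * (eps * eps)
            = 8 * (eps * eps * eps * ((1 + R) * (1 + R)))) by (field; lra).
    assert (0 <= eps * eps * (eps * (g * (g / 8 * (1 + R))))) by (repeat apply Rmult_le_pos; nra).
    assert (eps * eps * (eps * (g * (g / 8 * (1 + R)))) * ((1 + R) / 2)
            <= eps * eps * (eps * (g * (g / 8 * (1 + R)))) * Cnorm w)
      by (apply Rmult_le_compat_l; lra).
    assert (0 <= eps * eps * (eps * (g * (g / 8 * (1 + R)))) * Cnorm w)
      by (apply Rmult_le_pos; [lra | apply Cnorm_ge0]).
    nra.
Qed.

Definition large_regime_const (beta kap q : R) : R :=
  let g := gamma_beta beta in let d := g / 28 in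
  let sM := sqrt (2 * (/ (d * d) + beta)) in let k2 := kap / (sM + 2) in
  1 / (k2 * q) + 2 * ((sM + 1) / (d * d) + g) / (g * k2 * q).

Lemma large_regime_const_pos beta kap q : 0 < beta < 1/3 -> 0 < kap -> 0 < q ->
  0 < large_regime_const beta kap q.
Proof.
  intros Hbeta Hkap Hq; pose proof (gamma_beta_bounds beta Hbeta) as Hg.
  unfold large_regime_const; cbv zeta; set (g := gamma_beta beta) in *.
  pose proof (sqrt_pos (2 * (/ (g / 28 * (g / 28)) + beta))).
  set (sM := sqrt (2 * (/ (g / 28 * (g / 28)) + beta))) in *.
  assert (Hk2 : 0 < kap / (sM + 2)) by (apply Rdiv_lt_0_compat; lra).
  assert (0 < 1 / (kap / (sM + 2) * q)) by (apply Rdiv_lt_0_compat; nra).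
  assert (0 < (sM + 1) / (g / 28 * (g / 28))) by (apply Rdiv_lt_0_compat; nra).
  assert (0 < 2 * ((sM + 1) / (g / 28 * (g / 28)) + g) / (g * (kap / (sM + 2)) * q))
    by (apply Rdiv_lt_0_compat; [lra | apply Rmult_lt_0_compat; [apply Rmult_lt_0_compat|]; lra]).
  lra.
Qed.

Lemma l_eps_bounds_large beta kap b0 eps q K Cq :
  0 < beta < 1/3 -> 0 < kap -> 0 < b0 <= 1/4 ->
  (forall a b c2, gamma_beta beta / 28 / 2 <= a -> 0 < b <= b0 -> 1 <= c2 <= 2 ->
     kap * b * (1 + a) <= Cnorm (Csub (m_beta_sqr beta (mkC a b)) (RtoC c2))) ->
  0 < q <= 1/2 -> 0 < eps <= 1 -> eps * q <= b0 -> eps * q <= gamma_beta beta / 28 / 2 ->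
  gamma_beta beta / 28 <= Cnorm (mkC (eps * K) (eps * q)) ->
  large_regime_const beta kap q <= Cq ->
  l_eps_bounds beta eps q K Cq.
Proof.
  intros Hbeta Hkap Hb0 HLR Hq Heps Heb Hed Hlarge HCq.
  pose proof (large_lower_bound beta kap b0 eps K q Hbeta Hb0 HLR Hq Heps Heb Hed Hlarge) as HD.
  pose proof (large_upper_bound_rescaled beta kap b0 eps K q Hbeta Hb0 HLR Hq Heps Heb Hed Hlarge) as HE.
  pose proof (sqrt_sqrt_mul_le K eps Heps) as Hs.
  unfold large_regime_const in HCq; cbv zeta in HD, HE, HCq.
  pose proof (gamma_beta_bounds beta Hbeta) as Hg; set (g := gamma_beta beta) in *.
  set (d := g / 28) in *; assert (Hd : 0 < d) by (unfold d; lra).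
  pose proof (sqrt_pos (2 * (/ (d * d) + beta))) as HsM.
  set (sM := sqrt (2 * (/ (d * d) + beta))) in *.
  set (k2 := kap / (sM + 2)) in *; assert (Hk2 : 0 < k2) by (apply Rdiv_lt_0_compat; lra).
  set (s := sqrt (1 + Rabs (eps * K))) in *.
  assert (Hs1 : 1 <= s).
  { pose proof (Rabs_pos (eps * K)).
    apply Rle_of_sqr_le; [apply sqrt_pos | unfold s; rewrite sqrt_sqrt; lra]. }
  set (C3 := 1 / (k2 * q)) in *; set (C4 := 2 * ((sM + 1) / (d * d) + g) / (g * k2 * q)) in *.
  assert (HC3 : 0 < C3) by (apply Rdiv_lt_0_compat; nra).
  assert (HC4 : 0 < C4).
  { apply Rdiv_lt_0_compat; [|apply Rmult_lt_0_compat; [apply Rmult_lt_0_compat|]; lra].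
    assert (0 < (sM + 1) / (d * d)) by (apply Rdiv_lt_0_compat; nra); lra. }
  set (R := K * K + q * q) in *; assert (HR : 0 <= R) by (unfold R; nra).
  pose proof (Cnorm_one_add_sqr_ge K q Hq) as Hw; fold R in Hw.
  set (w := Cadd (RtoC 1) (Cmul (mkC K q) (mkC K q))) in *.
  assert (Hlam : 0 < k2 * q * s / eps)
    by (apply Rdiv_lt_0_compat; [apply Rmult_lt_0_compat; [apply Rmult_lt_0_compat|]|]; lra).
  apply (Cinv_estimates _ w g eps (k2 * q * s / eps)); try lra.
  - rewrite Cnorm_l_eps by lra; fold g.
    apply (Rle_div_r _ _ (eps * eps)); [nra|].
    replace (k2 * q * s / eps * (eps * eps)) with (k2 * (eps * q) * s) by (field; lra); lra.
  - apply Cnorm_neq0; lra.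
  - assert (C3 * (k2 * q * s / eps) = s / eps) by (unfold C3; field; repeat split; lra).
    assert (sqrt (sqrt (1 + K * K)) <= s / eps) by (apply (Rle_div_r _ _ eps); lra).
    assert (0 <= C4 * (k2 * q * s / eps)) by (apply Rmult_le_pos; lra).
    nra.
  - rewrite Cnorm_l_eps_add by lra; fold g.
    apply (Rle_div_l _ _ (eps * eps)); [nra|].
    replace (Cq * eps * (g * (k2 * q * s / eps) * Cnorm w) * (eps * eps))
      with (Cq * (g * k2 * q) * s * Cnorm w * (eps * eps)) by (field; lra).
    assert (Hlow : C4 * (g * k2 * q) * s * ((1 + R) / 2) * (eps * eps)
                   <= Cq * (g * k2 * q) * s * Cnorm w * (eps * eps)).
    { assert (HG : 0 < g * k2 * q) by (apply Rmult_lt_0_compat; [apply Rmult_lt_0_compat|]; lra).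
      apply Rmult_le_compat_r; [nra|]; apply Rmult_le_compat; try lra.
      - apply Rmult_le_pos; [apply Rmult_le_pos|]; lra.
      - apply Rmult_le_compat_r; [lra|]; apply Rmult_le_compat_r; lra. }
    replace (C4 * (g * k2 * q) * s * ((1 + R) / 2) * (eps * eps))
      with (((sM + 1) / (d * d) + g) * s * (eps * eps * (1 + R))) in Hlow
      by (unfold C4; field; repeat split; lra).
    lra.
Qed.

Theorem lemmaA2 (beta : R) (hb : 0 < beta < 1/3) :
  exists eps0 q0 : R, 0 < eps0 /\ 0 < q0 /\
  forall q : R, 0 < q <= q0 ->
  exists Cq : R, 0 < Cq /\
  forall eps : R, 0 < eps <= eps0 ->
  forall K : R,
    let Z := mkC K q in
    l_eps beta eps Z <> RtoC 0 /\
    sqrt (sqrt (1 + K * K)) * Cnorm (Cinv (l_eps beta eps Z)) <= Cq /\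
    Cnorm (Cadd (Cinv (l_eps beta eps Z))
                (Cmul (RtoC (/ gamma_beta beta))
                      (Cinv (Cadd (RtoC 1) (Cmul Z Z))))) <= Cq * eps.
Proof.
  pose proof (gamma_beta_bounds beta hb) as Hg; set (g := gamma_beta beta) in *.
  destruct (m_beta_sqr_sub_ge beta (g / 28 / 2) hb ltac:(lra)) as [kap [b0 [Hkap [Hb0 HLR]]]].
  pose proof (Rmin_l 1 (Rmin (2 * b0) (g / 28))); pose proof (Rmin_r 1 (Rmin (2 * b0) (g / 28))).
  pose proof (Rmin_l (2 * b0) (g / 28)); pose proof (Rmin_r (2 * b0) (g / 28)).
  exists (Rmin 1 (Rmin (2 * b0) (g / 28))), (1/2).
  split; [repeat apply Rmin_glb_lt; lra | split; [lra|]].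
  intros q Hq.
  pose proof (large_regime_const_pos beta kap q hb Hkap ltac:(lra)).
  assert (0 < 8 / g + 128 / (g * g)) by (assert (0 < 8 / g) by (apply Rdiv_lt_0_compat; lra);
                                         assert (0 < 128 / (g * g)) by (apply Rdiv_lt_0_compat; nra); lra).
  set (Cq := 8 / g + 128 / (g * g) + large_regime_const beta kap q).
  exists Cq; split; [unfold Cq; lra|].
  intros eps Heps K; change (l_eps_bounds beta eps q K Cq).
  assert (Heq : eps * q <= Rmin 1 (Rmin (2 * b0) (g / 28)) * (1/2)) by (apply Rmult_le_compat; lra).
  destruct (Rle_lt_dec (Cnorm (mkC (eps * K) (eps * q))) (g / 28)).
  - refine (l_eps_bounds_small beta eps q K Cq hb Hq _ _ _); [split| |unfold Cq]; fold g; lra.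
  - refine (l_eps_bounds_large beta kap b0 eps q K Cq hb Hkap Hb0 HLR Hq _ _ _ _ _);
      [split| | | |unfold Cq]; fold g; lra.
Qed.
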